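(* Let $\Pi$ be a proof structure with hypotheses $A_1,\ldots,A_n$ (labelled by strings $\alpha_1,\ldots,\alpha_n$) and conclusion $C$, whose abstract proof structure contracts, by a finite sequence $\rho$ of the contractions in the context, to a single comb with conclusion $C$ whose premiss sequence, read as a string, is $\gamma$. Then there is a natural deduction proof of $\alpha_1:A_1,\ldots,\alpha_n:A_n\vdash\gamma:C$ in the Displacement calculus.
   Context: Strings. String terms are built from a countably infinite set of variables (each of sort $0$) and a separator constant $\mathbf{1}$ by an associative concatenation $+$ (with empty string $\epsilon$). The sort of a string term is its number of occurrences of $\mathbf{1}$. For $k\in\{>,<\}\cup\{1,2,3,\ldots\}$ and strings $\alpha$ (of sort $\geq 1$, resp. $\geq k$ if $k$ is an integer) and $\beta$: write $\alpha=\alpha'+\mathbf{1}+\alpha''$ where the displayed $\mathbf{1}$ is the first occurrence of $\mathbf{1}$ if $k={>}$, the last one if $k={<}$, and the $k$-th one if $k$ is an integer; then $\alpha\times_k\beta=\alpha'+\beta+\alpha''$. Formulas. Atomic formulas have fixed sorts. Complex formulas are $A\bullet B$, $A\backslash C$, $C/B$, $A\odot_k B$, $A\downarrow_k C$, $C\uparrow_k B$ with sorts $s(A\bullet B)=s(A)+s(B)$, $s(A\backslash C)=s(C)-s(A)$, $s(C/B)=s(C)-s(B)$, $s(A\odot_k B)=s(A)+s(B)-1$, $s(A\downarrow_k C)=s(C)+1-s(A)$, $s(C\uparrow_k B)=s(C)+1-s(B)$; a formula is well formed only when all these sorts are $\geq 0$ and the wrap operations required below are defined. Natural deduction. Judgements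 are $\alpha:A$ with $\alpha$ a string of sort $s(A)$. Hypotheses (and withdrawn hypotheses) of sort $m$ are labelled $p_0+\mathbf{1}+\cdots+\mathbf{1}+p_m$ with fresh distinct variables $p_i$. Rules: $\backslash E$: from $\alpha:A$ and $\gamma:A\backslash C$ infer $\alpha+\gamma:C$; $\backslash I$: from a derivation of $\alpha+\gamma:C$ with hypothesis $\alpha:A$, withdraw it and infer $\gamma:A\backslash C$; $/E$: from $\gamma:C/B$ and $\beta:B$ infer $\gamma+\beta:C$; $/I$: from a derivation of $\gamma+\beta:C$ withdraw $\beta:B$, infer $\gamma:C/B$; $\bullet I$: from $\alpha:A,\beta:B$ infer $\alpha+\beta:A\bullet B$; $\bullet E$: from $\delta:A\bullet B$ and a derivation of $\gamma[\alpha+\beta]:C$ from hypotheses $\alpha:A,\beta:B$, withdraw these and infer $\gamma[\delta]:C$; $\downarrow_k E$: from $\alpha:A$ and $\gamma:A\downarrow_k C$ infer $\alpha\times_k\gamma:C$; $\downarrow_k I$: from a derivation of $\alpha\times_k\gamma:C$ withdraw $\alpha:A$, infer $\gamma:A\downarrow_k C$; $\uparrow_k E$: from $\gamma:C\uparrow_k B$ and $\beta:B$ infer $\gamma\times_k\beta:C$; $\uparrow_k I$: from a derivation of $\gamma\times_k\beta:C$ withdraw $\beta:B$, infer $\gamma:C\uparrow_k B$; $\odot_k I$: from $\alpha:A,\beta:B$ infer $\alpha\times_k\beta:A\odot_k B$; $\odot_k E$: from $\delta:A\odot_k B$ and a derivation of $\gamma[\alpha\times_k\beta]:C$ from $\alpha:A,\beta:B$,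 withdraw these and infer $\gamma[\delta]:C$. Links. A link joins an ordered list of premiss formulas and an ordered list of conclusion formulas. Tensor links: $[L/]$ premisses $C/B,B$, conclusion $C$, label $+$; $[L\backslash]$ premisses $A,A\backslash C$, conclusion $C$, label $+$; $[R\bullet]$ premisses $A,B$, conclusion $A\bullet B$, label $+$; $[L\uparrow_k]$ premisses $C\uparrow_k B,B$, conclusion $C$, label $\times_k$; $[L\downarrow_k]$ premisses $A, A\downarrow_k C$, conclusion $C$, label $\times_k$; $[R\odot_k]$ premisses $A,B$, conclusion $A\odot_k B$, label $\times_k$. Par links (one formula is marked as main): $[L\bullet]$ premiss $A\bullet B$ (main), conclusions $A,B$; $[L\odot_k]$ premiss $A\odot_k B$ (main), conclusions $A,B$; $[R/]$ premiss $C$, conclusions $C/B$ (main), $B$; $[R\backslash]$ premiss $C$, conclusions $A$, $A\backslash C$ (main); $[R\uparrow_k]$ premiss $C$, conclusions $C\uparrow_k B$ (main), $B$; $[R\downarrow_k]$ premiss $C$, conclusions $A$, $A\downarrow_k C$ (main). A proof structure is a set of formula occurrences and links instantiating these schemes such that each formula is premiss of at most one link and conclusion of at most one link. Its hypotheses are formulas that are conclusion of no link; its conclusions are formulas that are premiss of no link. Its auxiliary inputs are the non-main conclusions of par links (both conclusions for $[L\bullet]$, $[L\odot_k]$). Combs and abstract proof structures. A comb is a link with an ordered (possibly empty) list of premisses and one conclusion distinct from them; premisses are vertices or occurrences of the constant $\mathbf{1}$ (sort 1); the sort of a comb is the sum of the sorts of its premisses. The abstract proof structure of a proof structure is obtained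 by: replacing each $+$-labelled tensor link with premisses $v_1,v_2$ and conclusion $v_3$ by a comb with premisses $v_1,v_2$ and conclusion $v_3$; replacing each hypothesis $A_i$ of sort $m$ by an unlabelled vertex that is the conclusion of a comb with premisses $p_0,\mathbf{1},p_1,\ldots,\mathbf{1},p_m$ where $\alpha_i=p_0+\mathbf{1}+\cdots+\mathbf{1}+p_m$ with fresh distinct sort-0 variables $p_j$; replacing each auxiliary input $A$ of sort $m$ by an unlabelled vertex that is the conclusion of a comb with premisses $v_0,\mathbf{1},v_1,\ldots,\mathbf{1},v_m$, where $v_0,\ldots,v_m$ are fresh sort-0 vertices and the par link is connected to all of $v_0,\ldots,v_m$ instead of $A$ (the expansion of that auxiliary input); keeping the label of the conclusion of the structure and making all other vertices unlabelled (each keeping the sort of its formula). Contractions (sequences $\alpha_1,\alpha_2,\beta,\gamma_1,\gamma_2$ of comb premisses may be empty). $[+]$: a comb with premisses $\alpha_1,w,\alpha_2$ and conclusion $v$, where $w$ is the conclusion of a comb with premisses $\beta$, becomes one comb with premisses $\alpha_1,\beta,\alpha_2$ and conclusion $v$. $[\times_k]$: a $\times_k$ tensor link with conclusion $v$ whose first premiss is the conclusion of a comb with premisses $\alpha_1,\mathbf{1},\alpha_2$ and whose second premiss is the conclusion of a comb with premisses $\beta$ becomes a comb with premisses $\alpha_1,\beta,\alpha_2$ and conclusion $v$, where the displayed $\mathbf{1}$ is the one selected by $k$ ($\alpha_1$ of sort $0$ if $k={>}$, $\alpha_2$ of sort 0 if $k={<}$, $\alpha_1$ of sort $k-1$ if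 $k$ is an integer). In the logical contractions, a par link with main vertex $v$ (or premiss $v_1$ for $\bullet,\odot_k$) is removed together with its connections; $e_A, e_B$ denote the expansions of its auxiliary inputs. $[\backslash]$: par $[R\backslash]$ whose premiss is the conclusion of a comb with premisses $e_A,\beta$: result comb $\beta$ with conclusion $v$. $[/]$: symmetric with comb premisses $\beta,e_B$. $[\uparrow_k]$: par $[R\uparrow_k]$ whose premiss is the conclusion of a comb with premisses $\alpha_1,e_B,\alpha_2$: result comb $\alpha_1,\mathbf{1},\alpha_2$ with conclusion $v$, with the same sort restriction on $\alpha_1,\alpha_2$ as for $[\times_k]$. $[\downarrow_k]$: par $[R\downarrow_k]$ whose premiss is the conclusion of a comb with premisses $e',\beta,e''$ where $e_A=e',\mathbf{1},e''$ with the displayed $\mathbf{1}$ selected by $k$: result comb $\beta$ with conclusion $v$. $[\bullet]$: par $[L\bullet]$ with premiss $v_1$ and a comb with premisses $\gamma_1,e_A,e_B,\gamma_2$ and conclusion $v_2$: result comb $\gamma_1,v_1,\gamma_2$ with conclusion $v_2$. $[\odot_k]$: par $[L\odot_k]$ with premiss $v_1$, $e_A=e',\mathbf{1},e''$ with the $\mathbf{1}$ selected by $k$, and a comb with premisses $\gamma_1,e',e_B,e'',\gamma_2$ and conclusion $v_2$: result comb $\gamma_1,v_1,\gamma_2$ with conclusion $v_2$. *)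

From Stdlib Require Import List Arith Permutation Relations.
Import ListNotations.

Inductive mode : Type := MFirst | MLast | MNth (n : nat) .

Definition mode_ok (k : mode) : Prop :=
  match k with MNth n => 1 <= n | _ => True end.

(* minimal sort required of the wrapping string for mode k *)
Definition bound (k : mode) : nat :=
  match k with MNth n => n | _ => 1 end.

(* Strings: symbols are variables (sort 0) or the separator 1.       *)
(* In abstract proof structures the same type is used for comb       *)
(* premisses: SV v is the vertex v, S1 the constant 1; reading a     *)
(* premiss sequence as a string reads vertex v as the variable v.    *)
Inductive sym : Type := SV (v : nat) | S1.
Definition str := list sym.

Definition ssort (f : nat -> nat) (s : list sym) : nat :=
  fold_right (fun x acc => match x with S1 => 1 | SV v => f v end + acc) 0 s.

Definition str_sort (s : str) : nat := ssort (fun _ => 0) s.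

(* s = a1 + 1 + a2 where the displayed 1 is the one selected by k *)
Definition selected (f : nat -> nat) (k : mode) (a1 a2 : list sym) : Prop :=
  match k with
  | MFirst => ssort f a1 = 0
  | MLast => ssort f a2 = 0
  | MNth n => S (ssort f a1) = n
  end.

Definition wraps (k : mode) (a b r : str) : Prop :=
  exists a1 a2, a = a1 ++ S1 :: a2 /\ selected (fun _ => 0) k a1 a2 /\ r = a1 ++ b ++ a2.

Definition vars (s : str) : list nat :=
  flat_map (fun x => match x with SV v => [v] | S1 => [] end) s.

Fixpoint spine (ps : list nat) : list sym :=
  match ps with
  | [] => []
  | [p] => [SV p]
  | p :: ps' => SV p :: S1 :: spine ps'
  end.

Definition hyplabel (a : str) (m : nat) : Prop :=
  exists ps, NoDup ps /\ length ps = S m /\ a = spine ps.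

Inductive formula : Type :=
| Atom (name : nat) (s : nat)
| Prod (A B : formula)
| Under (A C : formula)
| Over (C B : formula)
| Wrap (k : mode) (A B : formula)
| Inf (k : mode) (A C : formula)
| Ext (k : mode) (C B : formula).

Fixpoint sort (F : formula) : nat :=
  match F with
  | Atom _ s => s
  | Prod A B => sort A + sort B
  | Under A C => sort C - sort A
  | Over C B => sort C - sort B
  | Wrap _ A B => sort A + sort B - 1
  | Inf _ A C => sort C + 1 - sort A
  | Ext _ C B => sort C + 1 - sort B
  end.

(* well-formedness: all (integer) sorts >= 0 and wraps defined *)
Fixpoint wf (F : formula) : Prop :=
  match F with
  | Atom _ _ => True
  | Prod A B => wf A /\ wf B
  | Under A C => wf A /\ wf C /\ sort A <= sort C
  | Over C B => wf C /\ wf B /\ sort B <= sort C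
  | Wrap k A B => wf A /\ wf B /\ mode_ok k /\ bound k <= sort A
  | Inf k A C => wf A /\ wf C /\ sort A <= sort C + 1 /\ mode_ok k /\ bound k <= sort A
  | Ext k C B => wf C /\ wf B /\ sort B <= sort C + 1 /\ mode_ok k
                 /\ bound k <= sort C + 1 - sort B
  end.

(* Labelled natural deduction (linear: each hypothesis used once).   *)
(* A judgement  nd G g C  means: there is an ND proof of g : C whose *)
(* undischarged hypotheses are exactly the labelled formulas in G.   *)
Definition ctx := list (str * formula).
Definition ctx_vars (G : ctx) : list nat := flat_map (fun p => vars (fst p)) G.
Definition disj (l1 l2 : list nat) : Prop := forall x, In x l1 -> ~ In x l2.

Inductive nd : ctx -> str -> formula -> Prop :=
| nd_hyp : forall a A, wf A -> hyplabel a (sort A) -> nd [(a, A)] a A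
| nd_perm : forall G G' s A, Permutation G G' -> nd G s A -> nd G' s A
| nd_underE : forall G D a g A C,
    nd G a A -> nd D g (Under A C) -> disj (ctx_vars G) (ctx_vars D) ->
    nd (G ++ D) (a ++ g) C
| nd_underI : forall G a g A C,
    nd ((a, A) :: G) (a ++ g) C -> hyplabel a (sort A) ->
    disj (vars a) (ctx_vars G) -> disj (vars a) (vars g) ->
    nd G g (Under A C)
| nd_overE : forall G D g b C B,
    nd G g (Over C B) -> nd D b B -> disj (ctx_vars G) (ctx_vars D) ->
    nd (G ++ D) (g ++ b) C
| nd_overI : forall G g b C B,
    nd ((b, B) :: G) (g ++ b) C -> hyplabel b (sort B) ->
    disj (vars b) (ctx_vars G) -> disj (vars b) (vars g) ->
    nd G g (Over C B)
| nd_prodI : forall G D a b A B,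
    nd G a A -> nd D b B -> disj (ctx_vars G) (ctx_vars D) ->
    nd (G ++ D) (a ++ b) (Prod A B)
| nd_prodE : forall D G d a b g1 g2 A B C,
    nd D d (Prod A B) ->
    nd ((a, A) :: (b, B) :: G) (g1 ++ a ++ b ++ g2) C ->
    hyplabel a (sort A) -> hyplabel b (sort B) -> disj (vars a) (vars b) ->
    disj (vars a ++ vars b) (ctx_vars G ++ ctx_vars D ++ vars g1 ++ vars g2) ->
    disj (ctx_vars D) (ctx_vars G) ->
    nd (D ++ G) (g1 ++ d ++ g2) C
| nd_infE : forall k G D a g r A C,
    nd G a A -> nd D g (Inf k A C) -> wraps k a g r -> disj (ctx_vars G) (ctx_vars D) ->
    nd (G ++ D) r C
| nd_infI : forall k G a g r A C,
    nd ((a, A) :: G) r C -> wraps k a g r -> hyplabel a (sort A) ->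
    disj (vars a) (ctx_vars G) -> disj (vars a) (vars g) ->
    nd G g (Inf k A C)
| nd_extE : forall k G D g b r C B,
    nd G g (Ext k C B) -> nd D b B -> wraps k g b r -> disj (ctx_vars G) (ctx_vars D) ->
    nd (G ++ D) r C
| nd_extI : forall k G g b r C B,
    nd ((b, B) :: G) r C -> wraps k g b r -> hyplabel b (sort B) ->
    disj (vars b) (ctx_vars G) -> disj (vars b) (vars g) ->
    nd G g (Ext k C B)
| nd_wrapI : forall k G D a b r A B,
    nd G a A -> nd D b B -> wraps k a b r -> disj (ctx_vars G) (ctx_vars D) ->
    nd (G ++ D) r (Wrap k A B)
| nd_wrapE : forall k D G d a b w g1 g2 A B C,
    nd D d (Wrap k A B) ->
    nd ((a, A) :: (b, B) :: G) (g1 ++ w ++ g2) C -> wraps k a b w ->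
    hyplabel a (sort A) -> hyplabel b (sort B) -> disj (vars a) (vars b) ->
    disj (vars a ++ vars b) (ctx_vars G ++ ctx_vars D ++ vars g1 ++ vars g2) ->
    disj (ctx_vars D) (ctx_vars G) ->
    nd (D ++ G) (g1 ++ d ++ g2) C.

(* Proof structures: formula occurrences are vertices (nat), labelled *)
(* by plab; links instantiate the schemes of the paper.              *)
Inductive link : Type :=
(* tensor links: premisses, then conclusion *)
| TOver (cb b c : nat)
| TUnder (a ac c : nat)
| TProd (a b ab : nat)
| TExt (k : mode) (cb b c : nat)
| TInf (k : mode) (a ac c : nat)
| TWrap (k : mode) (a b ab : nat)
(* par links: premiss, then conclusions *)
| PLProd (ab a b : nat)
| PLWrap (k : mode) (ab a b : nat)
| PROver (c cb b : nat)
| PRUnder (c a ac : nat)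
| PRExt (k : mode) (c cb b : nat)
| PRInf (k : mode) (c a ac : nat).

Definition prems (l : link) : list nat :=
  match l with
  | TOver x y _ | TUnder x y _ | TProd x y _
  | TExt _ x y _ | TInf _ x y _ | TWrap _ x y _ => [x; y]
  | PLProd x _ _ | PLWrap _ x _ _ | PROver x _ _ | PRUnder x _ _
  | PRExt _ x _ _ | PRInf _ x _ _ => [x]
  end.

Definition concls (l : link) : list nat :=
  match l with
  | TOver _ _ z | TUnder _ _ z | TProd _ _ z
  | TExt _ _ _ z | TInf _ _ _ z | TWrap _ _ _ z => [z]
  | PLProd _ y z | PLWrap _ _ y z | PROver _ y z | PRUnder _ y z
  | PRExt _ _ y z | PRInf _ _ y z => [y; z]
  end.

Definition auxs (l : link) : list nat :=
  match l with
  | PLProd _ a b | PLWrap _ _ a b => [a; b]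
  | PROver _ _ b | PRExt _ _ _ b => [b]
  | PRUnder _ a _ | PRInf _ _ a _ => [a]
  | _ => []
  end.

Definition link_ok (lab : nat -> formula) (l : link) : Prop :=
  match l with
  | TOver cb b c => lab cb = Over (lab c) (lab b)
  | TUnder a ac c => lab ac = Under (lab a) (lab c)
  | TProd a b ab => lab ab = Prod (lab a) (lab b)
  | TExt k cb b c => lab cb = Ext k (lab c) (lab b)
  | TInf k a ac c => lab ac = Inf k (lab a) (lab c)
  | TWrap k a b ab => lab ab = Wrap k (lab a) (lab b)
  | PLProd ab a b => lab ab = Prod (lab a) (lab b)
  | PLWrap k ab a b => lab ab = Wrap k (lab a) (lab b)
  | PROver c cb b => lab cb = Over (lab c) (lab b)
  | PRUnder c a ac => lab ac = Under (lab a) (lab c)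
  | PRExt k c cb b => lab cb = Ext k (lab c) (lab b)
  | PRInf k c a ac => lab ac = Inf k (lab a) (lab c)
  end.

Record pstruct : Type := {
  pverts : list nat;
  plab : nat -> formula;
  plinks : list link }.

Definition count_in (v : nat) (f : link -> list nat) (ls : list link) : nat :=
  length (filter (fun l => existsb (Nat.eqb v) (f l)) ls).

Definition proof_structure (P : pstruct) : Prop :=
  NoDup (pverts P) /\
  (forall v, In v (pverts P) -> wf (plab P v)) /\
  (forall l, In l (plinks P) ->
     link_ok (plab P) l /\ NoDup (prems l ++ concls l) /\
     incl (prems l ++ concls l) (pverts P)) /\
  (forall v, count_in v prems (plinks P) <= 1) /\
  (forall v, count_in v concls (plinks P) <= 1).

Definition is_hyp (P : pstruct) (v : nat) : Prop :=
  In v (pverts P) /\ forall l, In l (plinks P) -> ~ In v (concls l).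
Definition is_concl (P : pstruct) (v : nat) : Prop :=
  In v (pverts P) /\ forall l, In l (plinks P) -> ~ In v (prems l).

Definition all_auxs (P : pstruct) : list nat := flat_map auxs (plinks P).

Inductive par : Type :=
| ParLProd (v1 : nat) (eA eB : list nat)
| ParLWrap (k : mode) (v1 : nat) (eA eB : list nat)
| ParROver (c : nat) (v : nat) (eB : list nat)
| ParRUnder (c : nat) (eA : list nat) (v : nat)
| ParRExt (k : mode) (c : nat) (v : nat) (eB : list nat)
| ParRInf (k : mode) (c : nat) (eA : list nat) (v : nat).

Record aps : Type := {
  combs : list (list sym * nat);          (* (premisses, conclusion) *)
  tens : list (mode * nat * nat * nat);   (* x_k tensor links: k, prem1, prem2, concl *)
  pars : list par }.

(* the abstract proof structure of P, where fr h gives the fresh sort-0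
   vertices p_0..p_m of hypothesis h (so that alpha_h = spine (fr h)), and
   fr a gives the expansion vertices v_0..v_m of auxiliary input a *)
Definition abs_comb (l : link) : list (list sym * nat) :=
  match l with
  | TOver x y z | TUnder x y z | TProd x y z => [([SV x; SV y], z)]
  | _ => []
  end.

Definition abs_tens (l : link) : list (mode * nat * nat * nat) :=
  match l with
  | TExt k x y z | TInf k x y z | TWrap k x y z => [(k, x, y, z)]
  | _ => []
  end.

Definition abs_par (fr : nat -> list nat) (l : link) : list par :=
  match l with
  | PLProd ab a b => [ParLProd ab (fr a) (fr b)]
  | PLWrap k ab a b => [ParLWrap k ab (fr a) (fr b)]
  | PROver c cb b => [ParROver c cb (fr b)]
  | PRUnder c a ac => [ParRUnder c (fr a) ac]
  | PRExt k c cb b => [ParRExt k c cb (fr b)]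
  | PRInf k c a ac => [ParRInf k c (fr a) ac]
  | _ => []
  end.

Definition abstract (P : pstruct) (hs : list nat) (fr : nat -> list nat) : aps :=
  {| combs := flat_map abs_comb (plinks P)
              ++ map (fun h => (spine (fr h), h)) hs
              ++ map (fun a => (spine (fr a), a)) (all_auxs P);
     tens := flat_map abs_tens (plinks P);
     pars := flat_map (abs_par fr) (plinks P) |}.

Definition abs_sort (P : pstruct) (v : nat) : nat :=
  if in_dec Nat.eq_dec v (pverts P) then sort (plab P v) else 0.

Definition fresh_assignment (P : pstruct) (hs : list nat) (fr : nat -> list nat) : Prop :=
  (forall x, In x (hs ++ all_auxs P) -> length (fr x) = S (sort (plab P x))) /\
  NoDup (flat_map fr (hs ++ all_auxs P)) /\
  disj (flat_map fr (hs ++ all_auxs P)) (pverts P).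

Inductive contr (f : nat -> nat) : aps -> aps -> Prop :=
| c_plus : forall K T Q a1 a2 w v b K',
    Permutation K ((a1 ++ SV w :: a2, v) :: (b, w) :: K') ->
    contr f {| combs := K; tens := T; pars := Q |}
            {| combs := (a1 ++ b ++ a2, v) :: K'; tens := T; pars := Q |}
| c_wrap : forall K T Q k v1 v2 v a1 a2 b K' T',
    Permutation T ((k, v1, v2, v) :: T') ->
    Permutation K ((a1 ++ S1 :: a2, v1) :: (b, v2) :: K') ->
    selected f k a1 a2 ->
    contr f {| combs := K; tens := T; pars := Q |}
            {| combs := (a1 ++ b ++ a2, v) :: K'; tens := T'; pars := Q |}
| c_under : forall K T Q c eA v b K' Q',
    Permutation Q (ParRUnder c eA v :: Q') ->
    Permutation K ((spine eA ++ b, c) :: K') ->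
    contr f {| combs := K; tens := T; pars := Q |}
            {| combs := (b, v) :: K'; tens := T; pars := Q' |}
| c_over : forall K T Q c eB v b K' Q',
    Permutation Q (ParROver c v eB :: Q') ->
    Permutation K ((b ++ spine eB, c) :: K') ->
    contr f {| combs := K; tens := T; pars := Q |}
            {| combs := (b, v) :: K'; tens := T; pars := Q' |}
| c_ext : forall K T Q k c eB v a1 a2 K' Q',
    Permutation Q (ParRExt k c v eB :: Q') ->
    Permutation K ((a1 ++ spine eB ++ a2, c) :: K') ->
    selected f k a1 a2 ->
    contr f {| combs := K; tens := T; pars := Q |}
            {| combs := (a1 ++ S1 :: a2, v) :: K'; tens := T; pars := Q' |}
| c_inf : forall K T Q k c eA v e1 e2 b K' Q',
    Permutation Q (ParRInf k c eA v :: Q') ->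
    spine eA = e1 ++ S1 :: e2 -> selected f k e1 e2 ->
    Permutation K ((e1 ++ b ++ e2, c) :: K') ->
    contr f {| combs := K; tens := T; pars := Q |}
            {| combs := (b, v) :: K'; tens := T; pars := Q' |}
| c_prod : forall K T Q v1 eA eB g1 g2 v2 K' Q',
    Permutation Q (ParLProd v1 eA eB :: Q') ->
    Permutation K ((g1 ++ spine eA ++ spine eB ++ g2, v2) :: K') ->
    contr f {| combs := K; tens := T; pars := Q |}
            {| combs := (g1 ++ SV v1 :: g2, v2) :: K'; tens := T; pars := Q' |}
| c_wrappar : forall K T Q k v1 eA eB e1 e2 g1 g2 v2 K' Q',
    Permutation Q (ParLWrap k v1 eA eB :: Q') ->
    spine eA = e1 ++ S1 :: e2 -> selected f k e1 e2 ->
    Permutation K ((g1 ++ e1 ++ spine eB ++ e2 ++ g2, v2) :: K') ->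
    contr f {| combs := K; tens := T; pars := Q |}
            {| combs := (g1 ++ SV v1 :: g2, v2) :: K'; tens := T; pars := Q' |}.

From Stdlib Require Import List Relations Permutation Arith Lia.
Import ListNotations.

(* Read a comb of the abstract proof structure as a natural deduction
   derivation with holes: its premisses that are vertices of the proof
   structure are holes, to be filled by derivations of their formulas, and
   its fresh variables label the hypotheses (hypotheses of the proof
   structure or auxiliary inputs) it depends on.  Each contraction then
   builds a derivation: [+] grafts one comb into a hole of another, the
   combs of the +-labelled tensor links and the [x_k] contractions apply the
   elimination rules of the implications and the introduction rules of the
   products, and the par contractions apply the introduction rules of the
   implications and the elimination rules of the products, discharging the
   hypotheses labelled by the expansions of their auxiliary inputs.  So this
   reading survives every contraction, together with some bookkeeping: each
   fresh variable occurs once in the combs, and each hole is the premiss of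
   a link whose conclusion is still supplied by a comb, a tensor link or a
   par link.  When the single comb [gamma |- C] remains it has no hole, as
   [C] is the premiss of no link, so it is a derivation of [gamma : C] from
   the hypotheses. *)

Ltac app_norm := repeat rewrite <- app_assoc; repeat rewrite app_nil_r; repeat rewrite app_nil_l.

Lemma cons_as_app {A : Type} (x : A) (l : list A) : x :: l = [x] ++ l.
Proof. reflexivity. Qed.

(* Writes both sides as concatenations and rotates the right-hand side until
   its first block matches the left-hand side. *)
Ltac perm_solve :=
  repeat match goal with |- context [?x :: ?l] =>
    lazymatch l with nil => fail | _ => rewrite (cons_as_app x l) end end;
  app_norm;
  do 40 (first [ reflexivity | apply Permutation_app_head | apply perm_skip
               | eapply Permutation_trans; [ | apply Permutation_app_comm ]; app_norm ]).

Lemma nodup_app_disj (l1 l2 : list nat) : NoDup (l1 ++ l2) -> disj l1 l2.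
Proof.
  intros H x H1 H2. induction l1 as [|y l1 IH]; [inversion H1|].
  simpl in H. apply NoDup_cons_iff in H as [Hy H].
  destruct H1 as [<-|H1]; [apply Hy, in_or_app; auto|auto].
Qed.

Lemma disj_incl_r (a b c : list nat) : disj a b -> incl c b -> disj a c.
Proof. intros H Hi z Hz Hc. exact (H z Hz (Hi z Hc)). Qed.

Lemma Permutation_incl (l l' : list nat) : Permutation l l' -> incl l l'.
Proof. intros H z Hz. eapply Permutation_in; eauto. Qed.

Lemma removed_vars_disjoint (L d L2 : list nat) : NoDup L -> Permutation L (d ++ L2) ->
  incl L2 L /\ (forall z, In z L2 -> ~ In z d).
Proof.
  intros HN HP. assert (N : NoDup (d ++ L2)) by (eapply Permutation_NoDup; eauto).
  split.
  - intros z Hz. eapply Permutation_in; [symmetry; exact HP|apply in_or_app; auto].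
  - intros z Hz Hd. exact (nodup_app_disj _ _ N z Hd Hz).
Qed.

Lemma in_Permutation_cons (O : list nat) a : In a O -> exists O', Permutation O (a :: O').
Proof.
  intros H. apply in_split in H as (l1 & l2 & ->). exists (l1 ++ l2).
  symmetry. apply Permutation_middle.
Qed.

Lemma vars_spine (l : list nat) : vars (spine l) = l.
Proof.
  induction l as [|p l IH]; [reflexivity|].
  destruct l as [|q l]; [reflexivity|].
  change (vars (SV p :: S1 :: spine (q :: l)) = p :: q :: l).
  simpl vars. unfold vars in IH. simpl. f_equal. exact IH.
Qed.

Lemma vars_app (a b : str) : vars (a ++ b) = vars a ++ vars b.
Proof. apply flat_map_app. Qed.

Lemma ctx_vars_app (G D : ctx) : ctx_vars (G ++ D) = ctx_vars G ++ ctx_vars D.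
Proof. apply flat_map_app. Qed.

Lemma ssort_app f (a b : list sym) : ssort f (a ++ b) = ssort f a + ssort f b.
Proof. induction a; simpl; [reflexivity|]. unfold ssort in *. rewrite IHa. lia. Qed.

Lemma ssort_cons f x (s : list sym) :
  ssort f (x :: s) = match x with S1 => 1 | SV v => f v end + ssort f s.
Proof. reflexivity. Qed.

Lemma ssort_spine f (l : list nat) :
  (forall p, In p l -> f p = 0) -> ssort f (spine l) = length l - 1.
Proof.
  induction l as [|p l IH]; intros H; [reflexivity|].
  destruct l as [|q l].
  - simpl. rewrite (H p) by (left; auto). reflexivity.
  - change (ssort f (SV p :: S1 :: spine (q :: l)) = length (p :: q :: l) - 1).
    rewrite !ssort_cons, IH by (intros; apply H; right; auto).
    rewrite (H p) by (left; auto). simpl. lia.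
Qed.

Section Plugging.
Variable P : pstruct.

Definition is_vertex (x : nat) : bool := if in_dec Nat.eq_dec x (pverts P) then true else false.

Definition fresh_list (l : list nat) : Prop := forall p, In p l -> ~ In p (pverts P).

Definition holes (s : list sym) : list nat :=
  flat_map (fun y => match y with SV x => if is_vertex x then [x] else [] | S1 => [] end) s.

Definition free_vars (s : list sym) : list nat :=
  flat_map (fun y => match y with SV x => if is_vertex x then [] else [x] | S1 => [] end) s.

(* [sg x] is a derivation (context, string) filling the hole [x]. *)
Definition plug (sg : nat -> ctx * str) (s : list sym) : str :=
  flat_map (fun y => match y with
                     | SV x => if is_vertex x then snd (sg x) else [SV x]
                     | S1 => [S1] end) s.

Definition plug_ctx (sg : nat -> ctx * str) (l : list nat) : ctx :=
  flat_map (fun x => fst (sg x)) l.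

Definition fills (sg : nat -> ctx * str) (l : list nat) : Prop :=
  forall x, In x l -> nd (fst (sg x)) (snd (sg x)) (plab P x) /\
    incl (vars (snd (sg x))) (ctx_vars (fst (sg x))) /\
    str_sort (snd (sg x)) = sort (plab P x).

Lemma is_vertex_true x : is_vertex x = true <-> In x (pverts P).
Proof. unfold is_vertex; destruct in_dec; split; auto; congruence. Qed.

Lemma is_vertex_false x : is_vertex x = false <-> ~ In x (pverts P).
Proof. unfold is_vertex; destruct in_dec; split; auto; congruence. Qed.

Lemma abs_sort_fresh x : is_vertex x = false -> abs_sort P x = 0.
Proof. intros H. apply is_vertex_false in H. unfold abs_sort. destruct in_dec; tauto. Qed.

Lemma abs_sort_vertex x : is_vertex x = true -> abs_sort P x = sort (plab P x).
Proof. intros H. apply is_vertex_true in H. unfold abs_sort. destruct in_dec; tauto. Qed.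

Lemma holes_app a b : holes (a ++ b) = holes a ++ holes b.
Proof. apply flat_map_app. Qed.

Lemma free_vars_app a b : free_vars (a ++ b) = free_vars a ++ free_vars b.
Proof. apply flat_map_app. Qed.

Lemma plug_app sg a b : plug sg (a ++ b) = plug sg a ++ plug sg b.
Proof. apply flat_map_app. Qed.

Lemma plug_ctx_app sg a b : plug_ctx sg (a ++ b) = plug_ctx sg a ++ plug_ctx sg b.
Proof. apply flat_map_app. Qed.

Lemma holes_SV x : is_vertex x = true -> holes [SV x] = [x].
Proof. intros H; unfold holes; simpl; rewrite H; reflexivity. Qed.

Lemma plug_SV sg x : is_vertex x = true -> plug sg [SV x] = snd (sg x).
Proof. intros H; unfold plug; simpl; rewrite H, app_nil_r; reflexivity. Qed.

Lemma free_vars_SV x : is_vertex x = true -> free_vars [SV x] = [].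
Proof. intros H; unfold free_vars; simpl; rewrite H; reflexivity. Qed.

Lemma holes_mid a1 a2 w : is_vertex w = true ->
  holes (a1 ++ SV w :: a2) = holes a1 ++ w :: holes a2.
Proof. intros. rewrite holes_app, (cons_as_app _ a2), holes_app, holes_SV; auto. Qed.

Lemma plug_mid sg a1 a2 w : is_vertex w = true ->
  plug sg (a1 ++ SV w :: a2) = plug sg a1 ++ snd (sg w) ++ plug sg a2.
Proof. intros. rewrite plug_app, (cons_as_app _ a2), plug_app, plug_SV; auto. Qed.

Lemma plug_ctx_mid sg a1 a2 w : is_vertex w = true ->
  plug_ctx sg (holes (a1 ++ SV w :: a2)) =
    plug_ctx sg (holes a1) ++ fst (sg w) ++ plug_ctx sg (holes a2).
Proof. intros. rewrite holes_mid, plug_ctx_app by auto. reflexivity. Qed.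

Lemma free_vars_mid a1 a2 w : is_vertex w = true ->
  free_vars (a1 ++ SV w :: a2) = free_vars a1 ++ free_vars a2.
Proof. intros. rewrite free_vars_app, (cons_as_app _ a2), free_vars_app, free_vars_SV; auto. Qed.

Lemma holes_S1 a1 a2 : holes (a1 ++ S1 :: a2) = holes a1 ++ holes a2.
Proof. rewrite holes_app. reflexivity. Qed.

Lemma plug_S1 sg a1 a2 : plug sg (a1 ++ S1 :: a2) = plug sg a1 ++ S1 :: plug sg a2.
Proof. rewrite plug_app. reflexivity. Qed.

Lemma free_vars_S1 a1 a2 : free_vars (a1 ++ S1 :: a2) = free_vars a1 ++ free_vars a2.
Proof. rewrite free_vars_app. reflexivity. Qed.

Lemma plug_no_holes sg s : holes s = [] -> plug sg s = s.
Proof.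
  induction s as [|[x|] s IH]; intros H; [reflexivity| |];
    unfold holes, plug in *; simpl in *.
  - destruct (is_vertex x); [discriminate|]. simpl. f_equal; auto.
  - f_equal; auto.
Qed.

Lemma ssort_no_holes s : holes s = [] -> ssort (abs_sort P) s = str_sort s.
Proof.
  induction s as [|[x|] s IH]; intros H; [reflexivity| |]; unfold str_sort in *.
  - unfold holes in H; simpl in H. destruct (is_vertex x) eqn:E; [discriminate|].
    rewrite !ssort_cons, abs_sort_fresh by auto. f_equal; auto.
  - rewrite !ssort_cons. f_equal; auto.
Qed.

Lemma plug_closed_mid sg a1 a2 w : holes w = [] ->
  holes (a1 ++ w ++ a2) = holes a1 ++ holes a2 /\
  plug sg (a1 ++ w ++ a2) = plug sg a1 ++ w ++ plug sg a2.
Proof.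
  intros Hw. rewrite !holes_app, !plug_app, Hw, (plug_no_holes sg w) by auto.
  split; reflexivity.
Qed.

Lemma holes_spine l : fresh_list l -> holes (spine l) = [].
Proof.
  intros H. induction l as [|p l IH]; [reflexivity|].
  assert (Hp : is_vertex p = false) by (apply is_vertex_false, H; left; auto).
  destruct l as [|q l].
  - unfold holes; simpl. rewrite Hp. reflexivity.
  - change (holes (SV p :: S1 :: spine (q :: l)) = []).
    unfold holes in *; simpl. rewrite Hp. apply IH. intros r Hr; apply H; right; auto.
Qed.

Lemma free_vars_spine l : fresh_list l -> free_vars (spine l) = l.
Proof.
  intros H. induction l as [|p l IH]; [reflexivity|].
  assert (Hp : is_vertex p = false) by (apply is_vertex_false, H; left; auto).
  destruct l as [|q l].
  - unfold free_vars; simpl. rewrite Hp. reflexivity.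
  - change (free_vars (SV p :: S1 :: spine (q :: l)) = p :: q :: l).
    unfold free_vars in *; simpl. rewrite Hp. simpl. f_equal. apply IH.
    intros r Hr; apply H; right; auto.
Qed.

Lemma holes_spine_split l e1 e2 : fresh_list l -> spine l = e1 ++ S1 :: e2 ->
  holes e1 = [] /\ holes e2 = [].
Proof.
  intros Hf He. pose proof (holes_spine _ Hf) as H. rewrite He, holes_S1 in H.
  apply app_eq_nil in H. exact H.
Qed.

Lemma plug_ext sg sg' s : (forall x, In x (holes s) -> sg x = sg' x) -> plug sg s = plug sg' s.
Proof.
  induction s as [|[x|] s IH]; intros H; [reflexivity| |]; unfold holes, plug in *; simpl in *.
  - destruct (is_vertex x).
    + rewrite (H x) by (left; auto). f_equal. apply IH. intros; apply H; right; auto.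
    + f_equal; auto.
  - f_equal; auto.
Qed.

Lemma plug_ctx_ext sg sg' l : (forall x, In x l -> sg x = sg' x) -> plug_ctx sg l = plug_ctx sg' l.
Proof.
  induction l; intros H; simpl; auto. unfold plug_ctx in *; simpl.
  rewrite H by (left; auto). f_equal. apply IHl; intros; apply H; right; auto.
Qed.

Lemma fills_str_sort sg s : fills sg (holes s) -> str_sort (plug sg s) = ssort (abs_sort P) s.
Proof.
  induction s as [|[x|] s IH]; intros H; [reflexivity| |]; unfold str_sort in *.
  - rewrite ssort_cons. destruct (is_vertex x) eqn:E.
    + replace (plug sg (SV x :: s)) with (snd (sg x) ++ plug sg s)
        by (unfold plug; simpl; rewrite E; reflexivity).
      assert (Hx : In x (holes (SV x :: s))) by (unfold holes; simpl; rewrite E; left; auto).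
      rewrite ssort_app, abs_sort_vertex by auto.
      destruct (H x Hx) as (_ & _ & H3). unfold str_sort in H3. rewrite H3.
      f_equal. apply IH. intros y Hy; apply H. unfold holes in *; simpl; rewrite E; right; auto.
    + replace (plug sg (SV x :: s)) with (SV x :: plug sg s)
        by (unfold plug; simpl; rewrite E; reflexivity).
      rewrite ssort_cons, abs_sort_fresh by auto. f_equal. apply IH.
      intros y Hy; apply H. unfold holes in *; simpl; rewrite E; auto.
  - change (plug sg (S1 :: s)) with (S1 :: plug sg s).
    rewrite !ssort_cons. f_equal. apply IH; auto.
Qed.

Lemma fills_vars sg s : fills sg (holes s) ->
  incl (vars (plug sg s)) (free_vars s ++ ctx_vars (plug_ctx sg (holes s))).
Proof.
  induction s as [|[x|] s IH]; intros H; [intros z Hz; inversion Hz| |];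
    unfold holes, plug, free_vars in *; simpl in *.
  - destruct (is_vertex x) eqn:E; simpl.
    + rewrite vars_app. destruct (H x (or_introl eq_refl)) as (_ & H2 & _).
      unfold plug_ctx in *. simpl. rewrite ctx_vars_app.
      intros z Hz. apply in_app_or in Hz as [Hz|Hz].
      * apply in_or_app. right. apply in_or_app. left. auto.
      * specialize (IH (fun y Hy => H y (or_intror Hy)) z Hz).
        apply in_app_or in IH as [?|?];
          apply in_or_app; [left; auto|right; apply in_or_app; right; auto].
    + intros z [<-|Hz]; [left; auto|]. right. apply IH; auto.
  - apply IH; auto.
Qed.

Lemma fills_vars_incl sg s X : fills sg (holes s) -> incl (free_vars s) X ->
  incl (vars (plug sg s)) (X ++ ctx_vars (plug_ctx sg (holes s))).
Proof.
  intros Hs Hi z Hz. apply fills_vars in Hz; auto.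
  apply in_app_or in Hz as [Hz|Hz]; apply in_or_app; auto.
Qed.

Lemma selected_plug sg k a1 a2 : fills sg (holes a1) -> fills sg (holes a2) ->
  selected (abs_sort P) k a1 a2 -> selected (fun _ => 0) k (plug sg a1) (plug sg a2).
Proof.
  intros H1 H2 Hs. unfold selected in *.
  change (ssort (fun _ => 0)) with str_sort.
  rewrite !fills_str_sort by auto. exact Hs.
Qed.

Definition update (sg : nat -> ctx * str) (w : nat) (d : ctx * str) : nat -> ctx * str :=
  fun x => if Nat.eq_dec x w then d else sg x.

Lemma update_mid sg w d a1 a2 : is_vertex w = true -> ~ In w (holes a1 ++ holes a2) ->
  plug (update sg w d) (a1 ++ SV w :: a2) = plug sg a1 ++ snd d ++ plug sg a2 /\
  plug_ctx (update sg w d) (holes (a1 ++ SV w :: a2)) =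
    plug_ctx sg (holes a1) ++ fst d ++ plug_ctx sg (holes a2).
Proof.
  intros Hw Hnw.
  assert (E : forall x, In x (holes a1 ++ holes a2) -> update sg w d x = sg x).
  { intros x Hx. unfold update. destruct Nat.eq_dec; [subst; contradiction|reflexivity]. }
  assert (Ew : update sg w d w = d) by (unfold update; destruct Nat.eq_dec; congruence).
  rewrite plug_mid, holes_mid, plug_ctx_app, (cons_as_app w), plug_ctx_app by auto.
  rewrite (plug_ext _ sg a1), (plug_ext _ sg a2), (plug_ctx_ext _ sg (holes a1)),
    (plug_ctx_ext _ sg (holes a2)) by (intros; apply E, in_or_app; auto).
  unfold plug_ctx at 2; simpl. rewrite Ew, app_nil_r. auto.
Qed.

End Plugging.

Definition plus_linked (X Y Z : formula) : Prop :=
  X = Over Z Y \/ Y = Under X Z \/ Z = Prod X Y.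

Definition wrap_linked (k : mode) (X Y Z : formula) : Prop :=
  X = Ext k Z Y \/ Y = Inf k X Z \/ Z = Wrap k X Y.

Lemma nd_plus_linked G D a b X Y Z : nd G a X -> nd D b Y ->
  disj (ctx_vars G) (ctx_vars D) -> plus_linked X Y Z -> nd (G ++ D) (a ++ b) Z.
Proof.
  intros H1 H2 Hd [->|[->| ->]].
  - eapply nd_overE; eauto.
  - eapply nd_underE; eauto.
  - eapply nd_prodI; eauto.
Qed.

Lemma nd_wrap_linked k G D a b r X Y Z : nd G a X -> nd D b Y -> wraps k a b r ->
  disj (ctx_vars G) (ctx_vars D) -> wrap_linked k X Y Z -> nd (G ++ D) r Z.
Proof.
  intros H1 H2 Hw Hd [->|[->| ->]].
  - eapply nd_extE; eauto.
  - eapply nd_infE; eauto.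
  - eapply nd_wrapI; eauto.
Qed.

Lemma plus_linked_sort X Y Z : plus_linked X Y Z -> wf X -> wf Y -> wf Z ->
  sort Z = sort X + sort Y.
Proof. intros [->|[->| ->]]; simpl; intros; try tauto; lia. Qed.

Lemma wrap_linked_sort k X Y Z : wrap_linked k X Y Z -> wf X -> wf Y -> wf Z -> 1 <= sort X ->
  sort Z = sort X + sort Y - 1.
Proof. intros [->|[->| ->]]; simpl; intros; lia. Qed.

(* The introduction rules of the implications, discharging [a : A]; [rel g r]
   relates the string [g] of the conclusion to the string [r] of the premiss. *)
Definition intro_rule (a : str) (A C Z : formula) (rel : str -> str -> Prop) : Prop :=
  forall G g r, rel g r -> nd ((a, A) :: G) r C -> hyplabel a (sort A) ->
    disj (vars a) (ctx_vars G) -> disj (vars a) (vars g) -> nd G g Z.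

Lemma intro_rule_under a A C : intro_rule a A C (Under A C) (fun g r => r = a ++ g).
Proof. intros G g r -> H Ha H1 H2. eapply nd_underI; eauto. Qed.

Lemma intro_rule_over b B C : intro_rule b B C (Over C B) (fun g r => r = g ++ b).
Proof. intros G g r -> H Hb H1 H2. eapply nd_overI; eauto. Qed.

Lemma intro_rule_ext k b B C : intro_rule b B C (Ext k C B) (fun g r => wraps k g b r).
Proof. intros G g r Hw H Hb H1 H2. eapply nd_extI; eauto. Qed.

Lemma intro_rule_inf k a A C : intro_rule a A C (Inf k A C) (fun g r => wraps k a g r).
Proof. intros G g r Hw H Ha H1 H2. eapply nd_infI; eauto. Qed.

Definition elim_rule (a b w : str) (A B Z : formula) : Prop :=
  forall D G d g1 g2 C, nd D d Z -> nd ((a, A) :: (b, B) :: G) (g1 ++ w ++ g2) C ->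
    hyplabel a (sort A) -> hyplabel b (sort B) -> disj (vars a) (vars b) ->
    disj (vars a ++ vars b) (ctx_vars G ++ ctx_vars D ++ vars g1 ++ vars g2) ->
    disj (ctx_vars D) (ctx_vars G) -> nd (D ++ G) (g1 ++ d ++ g2) C.

Lemma elim_rule_prod a b A B : elim_rule a b (a ++ b) A B (Prod A B).
Proof. intros D G d g1 g2 C HD H. rewrite <- app_assoc in H. intros; eapply nd_prodE; eauto. Qed.

Lemma elim_rule_wrap k a b w A B : wraps k a b w -> elim_rule a b w A B (Wrap k A B).
Proof. intros Hw D G d g1 g2 C; intros; eapply nd_wrapE; eauto. Qed.

Definition par_vars (p : par) : list nat :=
  match p with
  | ParLProd _ eA eB | ParLWrap _ _ eA eB => eA ++ eB
  | ParROver _ _ eB | ParRExt _ _ _ eB => eB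
  | ParRUnder _ eA _ | ParRInf _ _ eA _ => eA
  end.

Definition par_premiss (p : par) : nat :=
  match p with
  | ParLProd v _ _ | ParLWrap _ v _ _ | ParROver v _ _ | ParRUnder v _ _
  | ParRExt _ v _ _ | ParRInf _ v _ _ => v
  end.

Definition par_main (p : par) : list nat :=
  match p with
  | ParLProd _ _ _ | ParLWrap _ _ _ _ => []
  | ParROver _ v _ | ParRExt _ _ v _ | ParRUnder _ _ v | ParRInf _ _ _ v => [v]
  end.

Definition tens_premisses (t : mode * nat * nat * nat) : list nat :=
  let '(_, x, y, _) := t in [x; y].

Definition tens_concl (t : mode * nat * nat * nat) : nat :=
  let '(_, _, _, z) := t in z.


Lemma existsb_eqb_In v (l : list nat) : In v l -> existsb (Nat.eqb v) l = true.
Proof. intros H. apply existsb_exists. exists v. split; auto. apply Nat.eqb_refl. Qed.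

Lemma count_in_cons v f l L : count_in v f (l :: L) =
  (if existsb (Nat.eqb v) (f l) then 1 else 0) + count_in v f L.
Proof. unfold count_in. simpl. destruct existsb; reflexivity. Qed.

Lemma count_in_pos v f L l : In l L -> In v (f l) -> 1 <= count_in v f L.
Proof.
  induction L as [|l' L IH]; intros Hl Hv; [inversion Hl|]. rewrite count_in_cons.
  destruct Hl as [<-|Hl]; [rewrite existsb_eqb_In by auto; lia|]. specialize (IH Hl Hv). lia.
Qed.

Lemma NoDup_flat_map_count (f : link -> list nat) L : (forall v, count_in v f L <= 1) ->
  (forall l, In l L -> NoDup (f l)) -> NoDup (flat_map f L).
Proof.
  induction L as [|l L IH]; intros Hc Hn; [constructor|]. simpl. apply NoDup_app.
  - apply Hn; left; auto.
  - apply IH; [intros v; specialize (Hc v); rewrite count_in_cons in Hc; lia|].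
    intros; apply Hn; right; auto.
  - intros v Hv Hv'. apply in_flat_map in Hv' as (l' & Hl' & Hv'). specialize (Hc v).
    rewrite count_in_cons, existsb_eqb_In in Hc by auto.
    pose proof (count_in_pos v f L l' Hl' Hv'). lia.
Qed.

Lemma auxs_concls l a : In a (auxs l) -> In a (concls l).
Proof. destruct l; simpl; tauto. Qed.

Section Soundness.
Variables (P : pstruct) (fr : nat -> list nat) (hs : list nat).
Hypothesis fresh_fr : fresh_assignment P hs fr.

Definition inputs : list nat := hs ++ all_auxs P.
Definition input_vars : list nat := flat_map fr inputs.
Definition hyp_of (o : nat) : str * formula := (spine (fr o), plab P o).

(* A comb with premisses [s] and conclusion [v], depending on the inputs [O],
   is a derivation with holes: filling its holes by derivations of their
   formulas yields a derivation of [v] from the hypotheses [O] and those of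
   the fillings.  The fillings must not use the input variables outside [L],
   the ones still occurring in the combs, so that discharging an input later
   never captures a variable of a filling. *)
Definition derives (L O : list nat) (s : list sym) (v : nat) : Prop :=
  forall sg, fills P sg (holes P s) ->
    NoDup (flat_map fr O ++ ctx_vars (plug_ctx sg (holes P s))) ->
    (forall z, In z (ctx_vars (plug_ctx sg (holes P s))) -> In z input_vars -> In z L) ->
    nd (map hyp_of O ++ plug_ctx sg (holes P s)) (plug P sg s) (plab P v).

Lemma ctx_vars_hyp_of O : ctx_vars (map hyp_of O) = flat_map fr O.
Proof.
  induction O; simpl; auto. unfold ctx_vars in *. simpl. rewrite vars_spine, IHO. reflexivity.
Qed.

Ltac push_app := repeat (rewrite ?holes_app, ?plug_ctx_app, ?ctx_vars_app, ?flat_map_app,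
  ?map_app, ?plug_app, ?free_vars_app, ?ctx_vars_hyp_of in *).

Lemma NoDup_flat_map_elem (L : list nat) x : NoDup (flat_map fr L) -> In x L -> NoDup (fr x).
Proof.
  induction L as [|w L IH]; intros HN Hx; [inversion Hx|]. simpl in HN.
  destruct Hx as [<-|Hx]; [eapply NoDup_app_remove_r; eauto|].
  apply IH; auto. eapply NoDup_app_remove_l; eauto.
Qed.

Lemma fr_nodup x : In x inputs -> NoDup (fr x).
Proof. intros Hx. destruct fresh_fr as (_ & HN & _). eapply NoDup_flat_map_elem; eauto. Qed.

Lemma fr_fresh x : In x inputs -> fresh_list P (fr x).
Proof. intros Hx p Hp. destruct fresh_fr as (_ & _ & HD). apply HD. apply in_flat_map. eauto. Qed.

Lemma fr_input_vars x : In x inputs -> incl (fr x) input_vars.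
Proof. intros Hx p Hp. apply in_flat_map. eauto. Qed.

Lemma fr_length x : In x inputs -> length (fr x) = S (sort (plab P x)).
Proof. intros Hx. destruct fresh_fr as (HL & _ & _). apply HL. exact Hx. Qed.

Lemma fr_nonempty x : In x inputs -> exists z, In z (fr x).
Proof.
  intros Hx. pose proof (fr_length x Hx).
  destruct (fr x) as [|z l]; [discriminate|]. exists z; left; auto.
Qed.

Lemma hyplabel_fr x : In x inputs -> hyplabel (spine (fr x)) (sort (plab P x)).
Proof. intros Hx. exists (fr x). auto using fr_nodup, fr_length. Qed.

Lemma ssort_spine_fr x : In x inputs -> ssort (abs_sort P) (spine (fr x)) = sort (plab P x).
Proof.
  intros Hx. rewrite ssort_spine, fr_length by
    (auto; intros z Hz; apply abs_sort_fresh, is_vertex_false, (fr_fresh x Hx); auto).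
  lia.
Qed.

Lemma derives_mono L L' O s v : incl L' L -> derives L O s v -> derives L' O s v.
Proof. intros Hi H sg H1 H2 H3. apply H; auto. Qed.

Lemma derives_perm L O O' s v : Permutation O O' -> derives L O s v -> derives L O' s v.
Proof.
  intros HP H sg H1 H2 H3. eapply nd_perm; [|apply H; auto].
  - apply Permutation_app_tail, Permutation_map, HP.
  - eapply Permutation_NoDup; [|exact H2].
    apply Permutation_app_tail, Permutation_flat_map. symmetry; exact HP.
Qed.

Lemma derives_input L h : In h inputs -> wf (plab P h) -> derives L [h] (spine (fr h)) h.
Proof.
  intros Hh Hwf sg Hs Hn HL.
  rewrite holes_spine, plug_no_holes by (auto using fr_fresh, holes_spine).
  simpl. apply nd_hyp; auto using hyplabel_fr.
Qed.

Lemma derives_plus_link L x y z : is_vertex P x = true -> is_vertex P y = true ->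
  plus_linked (plab P x) (plab P y) (plab P z) -> derives L [] [SV x; SV y] z.
Proof.
  intros Hx Hy Hp sg Hs Hn HL.
  change [SV x; SV y] with ([SV x] ++ [SV y]) in *.
  push_app. rewrite !holes_SV, !plug_SV in * by auto. simpl in *.
  unfold plug_ctx in *; simpl in *. rewrite !app_nil_r in *.
  apply nd_plus_linked with (X := plab P x) (Y := plab P y); auto.
  - apply Hs; left; auto.
  - apply Hs; right; left; auto.
  - apply nodup_app_disj. exact Hn.
Qed.

Lemma derives_plus L Oa Ob a1 a2 b w v :
  is_vertex P w = true -> ~ In w (holes P a1 ++ holes P a2) ->
  Permutation (free_vars P b) (flat_map fr Ob) -> incl (flat_map fr Ob) L ->
  ssort (abs_sort P) b = sort (plab P w) ->
  derives L Oa (a1 ++ SV w :: a2) v -> derives L Ob b w -> derives L (Oa ++ Ob) (a1 ++ b ++ a2) v.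
Proof.
  intros Hw Hnw Hfb HfL Hsb Ha Hb sg Hs Hn HL.
  set (Cb := map hyp_of Ob ++ plug_ctx sg (holes P b)).
  push_app.
  assert (Hfa : fills P sg (holes P a1 ++ holes P a2))
    by (intros x Hx; apply Hs; rewrite !in_app_iff in *; tauto).
  assert (Hfb' : fills P sg (holes P b))
    by (intros x Hx; apply Hs; rewrite !in_app_iff in *; tauto).
  assert (HB : nd Cb (plug P sg b) (plab P w)).
  { apply Hb; auto.
    - apply (NoDup_app_remove_r _ (flat_map fr Oa ++ ctx_vars (plug_ctx sg (holes P a1))
        ++ ctx_vars (plug_ctx sg (holes P a2)))).
      eapply Permutation_NoDup; [|exact Hn]. perm_solve.
    - intros z Hz; apply HL. rewrite !in_app_iff; tauto. }
  destruct (update_mid P sg w (Cb, plug P sg b) a1 a2 Hw Hnw) as [E1 E2].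
  specialize (Ha (update sg w (Cb, plug P sg b))). rewrite E1, E2 in Ha. clear E1 E2.
  unfold Cb in *; clear Cb. cbn [fst snd] in Ha. push_app.
  eapply nd_perm; [|apply Ha].
  - perm_solve.
  - intros x Hx. unfold update. destruct Nat.eq_dec as [->|Hxw]; cbn [fst snd].
    + split; [exact HB|split; [|rewrite fills_str_sort; auto]].
      intros z Hz. apply fills_vars in Hz; auto. push_app.
      rewrite !in_app_iff in *. destruct Hz as [Hz|Hz]; [left|right]; auto.
      eapply Permutation_in; eauto.
    + apply Hfa. rewrite (cons_as_app _ a2), holes_app, holes_SV in Hx by auto.
      apply in_app_or in Hx as [Hx|[Hx|Hx]]; [| congruence |]; apply in_or_app; auto.
  - eapply Permutation_NoDup; [|exact Hn]. perm_solve.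
  - intros z Hz HF. rewrite !in_app_iff in Hz. destruct Hz as [Hz|[[Hz|Hz]|Hz]].
    + apply HL; auto; rewrite !in_app_iff; tauto.
    + apply HfL; auto.
    + apply HL; auto; rewrite !in_app_iff; tauto.
    + apply HL; auto; rewrite !in_app_iff; tauto.
Qed.


Lemma derives_wrap L O1 O2 a1 a2 b k v1 v2 v :
  derives L O1 (a1 ++ S1 :: a2) v1 -> derives L O2 b v2 -> selected (abs_sort P) k a1 a2 ->
  wrap_linked k (plab P v1) (plab P v2) (plab P v) -> derives L (O1 ++ O2) (a1 ++ b ++ a2) v.
Proof.
  intros H1 H2 Hsel Hw sg Hs Hn HL.
  specialize (H1 sg). specialize (H2 sg). rewrite holes_S1, plug_S1 in H1.
  push_app.
  assert (Hs1 : fills P sg (holes P a1 ++ holes P a2))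
    by (intros x Hx; apply Hs; rewrite !in_app_iff in *; tauto).
  assert (Hs2 : fills P sg (holes P b))
    by (intros x Hx; apply Hs; rewrite !in_app_iff in *; tauto).
  assert (Hn' : NoDup ((flat_map fr O1 ++ ctx_vars (plug_ctx sg (holes P a1))
      ++ ctx_vars (plug_ctx sg (holes P a2)))
      ++ (flat_map fr O2 ++ ctx_vars (plug_ctx sg (holes P b))))).
  { eapply Permutation_NoDup; [|exact Hn]. perm_solve. }
  eapply nd_perm; [|eapply nd_wrap_linked; [apply H1|apply H2| | |exact Hw]].
  - perm_solve.
  - auto.
  - eapply NoDup_app_remove_r; exact Hn'.
  - intros z Hz; apply HL; rewrite !in_app_iff in *; tauto.
  - auto.
  - eapply NoDup_app_remove_l; exact Hn'.
  - intros z Hz; apply HL; rewrite !in_app_iff in *; tauto.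
  - exists (plug P sg a1), (plug P sg a2). split; [reflexivity|split; [|reflexivity]].
    apply selected_plug; auto; intros x Hx; apply Hs1; apply in_or_app; auto.
  - push_app. apply nodup_app_disj. exact Hn'.
Qed.

Lemma discharge_disjoint L L' d FO Cv :
  NoDup d -> incl d input_vars -> incl L' L -> (forall z, In z L' -> ~ In z d) -> disj d FO ->
  NoDup (FO ++ Cv) -> (forall z, In z Cv -> In z input_vars -> In z L') ->
  NoDup (d ++ FO ++ Cv) /\ (forall z, In z Cv -> In z input_vars -> In z L) /\ disj d (FO ++ Cv).
Proof.
  intros Hd HdF HL' HL'd Hdisj Hn HC.
  assert (D : disj d (FO ++ Cv)).
  { intros z Hz Hz'. apply in_app_or in Hz' as [Hz'|Hz'].
    - exact (Hdisj z Hz Hz').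
    - exact (HL'd z (HC z Hz' (HdF z Hz)) Hz). }
  split; [|split; auto]. apply NoDup_app; auto.
Qed.

Lemma derives_intro L L' a O s s2 c v rel : In a inputs ->
  intro_rule (spine (fr a)) (plab P a) (plab P c) (plab P v) rel ->
  holes P s = holes P s2 ->
  (forall sg, fills P sg (holes P s2) -> rel (plug P sg s2) (plug P sg s)) ->
  derives L (a :: O) s c ->
  incl L' L -> (forall z, In z L' -> ~ In z (fr a)) ->
  Permutation (free_vars P s2) (flat_map fr O) -> disj (fr a) (flat_map fr O) ->
  derives L' O s2 v.
Proof.
  intros Ha Hrule Eh Hrel H HL' HL'd Hp Hdj sg Hs Hn HL.
  destruct (discharge_disjoint L L' (fr a) (flat_map fr O) _ (fr_nodup a Ha) (fr_input_vars a Ha)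
    HL' HL'd Hdj Hn HL) as (N1 & N2 & N3).
  rewrite <- Eh, app_assoc in N1. rewrite <- Eh in Hs, N2.
  specialize (H sg Hs N1 N2). rewrite Eh in H.
  rewrite Eh in Hs.
  apply (Hrule _ _ (plug P sg s)); auto using hyplabel_fr.
  - rewrite vars_spine, ctx_vars_app, ctx_vars_hyp_of. exact N3.
  - rewrite vars_spine. eapply disj_incl_r; [exact N3|].
    apply fills_vars_incl; auto using Permutation_incl.
Qed.

Lemma derives_elim L L' a b O g1 g2 w v1 v2 : In a inputs -> In b inputs -> NoDup (fr a ++ fr b) ->
  is_vertex P v1 = true -> holes P w = [] ->
  elim_rule (spine (fr a)) (spine (fr b)) w (plab P a) (plab P b) (plab P v1) ->
  derives L (a :: b :: O) (g1 ++ w ++ g2) v2 ->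
  incl L' L -> (forall z, In z L' -> ~ In z (fr a ++ fr b)) ->
  Permutation (free_vars P g1 ++ free_vars P g2) (flat_map fr O) ->
  disj (fr a ++ fr b) (flat_map fr O) ->
  derives L' O (g1 ++ SV v1 :: g2) v2.
Proof.
  intros Ha Hb Hnd Hv1 Hw Hrule H HL' HL'd Hp Hdj sg Hs Hn HL.
  destruct (plug_closed_mid P sg g1 g2 w Hw) as [Eh Ep].
  specialize (H sg). rewrite Eh, Ep, plug_ctx_app in H.
  rewrite plug_ctx_mid in Hn, HL |- * by auto. rewrite plug_mid by auto.
  rewrite holes_mid in Hs by auto.
  set (D0 := fst (sg v1)) in *. set (G1 := plug_ctx sg (holes P g1)) in *.
  set (G2 := plug_ctx sg (holes P g2)) in *.
  assert (HF : incl (fr a ++ fr b) input_vars) by (apply incl_app; apply fr_input_vars; auto).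
  destruct (discharge_disjoint L L' _ (flat_map fr O) _ Hnd HF HL' HL'd Hdj Hn HL)
    as (N1 & N2 & N3).
  rewrite !ctx_vars_app in N1, N2, N3.
  assert (Hs1 : fills P sg (holes P g1 ++ holes P g2))
    by (intros x Hx; apply Hs; rewrite !in_app_iff in *; simpl; tauto).
  assert (Hg : forall g, In g [g1; g2] ->
    incl (vars (plug P sg g)) (flat_map fr O ++ ctx_vars (plug_ctx sg (holes P g)))).
  { intros g Hg. apply fills_vars_incl.
    - intros x Hx; apply Hs1, in_or_app. destruct Hg as [<-|[<-|[]]]; auto.
    - intros z Hz. eapply Permutation_in; [exact Hp|].
      apply in_or_app. destruct Hg as [<-|[<-|[]]]; auto. }
  eapply nd_perm; [|apply (Hrule D0 (map hyp_of O ++ G1 ++ G2))].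
  - perm_solve.
  - apply Hs. apply in_or_app; right; left; auto.
  - apply H; auto.
    + rewrite ctx_vars_app. eapply NoDup_app_remove_r with (l' := ctx_vars D0).
      eapply Permutation_NoDup; [|exact N1]. cbn [flat_map]. perm_solve.
    + rewrite ctx_vars_app. intros z Hz; apply N2; rewrite !in_app_iff in *; tauto.
  - apply hyplabel_fr; auto.
  - apply hyplabel_fr; auto.
  - rewrite !vars_spine. apply nodup_app_disj; auto.
  - rewrite !vars_spine. eapply disj_incl_r; [exact N3|].
    rewrite !ctx_vars_app, ctx_vars_hyp_of.
    intros z Hz. pose proof (Hg g1 (or_introl eq_refl) z).
    pose proof (Hg g2 (or_intror (or_introl eq_refl)) z).
    unfold G1, G2 in *. rewrite !in_app_iff in *. tauto.
  - rewrite !ctx_vars_app, ctx_vars_hyp_of. apply nodup_app_disj.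
    apply (NoDup_app_remove_r _ (fr a ++ fr b)). eapply Permutation_NoDup; [|exact N1]. perm_solve.
Qed.

Hypothesis ps_P : proof_structure P.
Hypothesis hyps_hs : forall v, In v hs <-> is_hyp P v.

Definition aps0 : aps := abstract P hs fr.

Definition comb_vars (K : list (list sym * nat)) : list nat :=
  flat_map (fun p => free_vars P (fst p)) K.

Definition demands (X : aps) : list nat :=
  flat_map (fun p => holes P (fst p)) (combs X) ++ flat_map tens_premisses (tens X)
  ++ map par_premiss (pars X).

Definition supplies (X : aps) : list nat :=
  map snd (combs X) ++ map tens_concl (tens X) ++ flat_map par_main (pars X).

Definition comb_ok (L : list nat) (p : list sym * nat) : Prop :=
  In (snd p) (pverts P) /\ ssort (abs_sort P) (fst p) = sort (plab P (snd p)) /\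
  exists O, incl O inputs /\ Permutation (free_vars P (fst p)) (flat_map fr O) /\
    derives L O (fst p) (snd p).

(* The demands are the vertices that still have to be produced: holes of
   combs and premisses of the remaining links.  Each is demanded once, is a
   premiss of a link of [P] and is supplied as the conclusion of a comb, a
   tensor link or the main vertex of a par link. *)
Record invariant (X : aps) : Prop := {
  inv_combs : forall p, In p (combs X) -> comb_ok (comb_vars (combs X)) p;
  inv_vars : Permutation (comb_vars (combs X)) (flat_map fr hs ++ flat_map par_vars (pars X));
  inv_vars_nodup : NoDup (comb_vars (combs X));
  inv_tens : incl (tens X) (tens aps0);
  inv_pars : incl (pars X) (pars aps0);
  inv_demands_nodup : NoDup (demands X);
  inv_demands_supplied : incl (demands X) (supplies X);
  inv_demands_premisses : incl (demands X) (flat_map prems (plinks P)) }.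

Lemma comb_ok_mono L L' p : incl L' L -> comb_ok L p -> comb_ok L' p.
Proof.
  destruct p as [s v]. intros Hi (H1 & H2 & O & H3 & H4 & H5). split; [|split]; auto.
  exists O. repeat split; auto. eapply derives_mono; eauto.
Qed.

Lemma comb_vars_perm K K' : Permutation K K' -> Permutation (comb_vars K) (comb_vars K').
Proof. intros. unfold comb_vars. apply Permutation_flat_map. auto. Qed.

Lemma comb_vars_app K K' : comb_vars (K ++ K') = comb_vars K ++ comb_vars K'.
Proof. apply flat_map_app. Qed.

Lemma comb_vars_cons s v K : comb_vars ((s, v) :: K) = free_vars P s ++ comb_vars K.
Proof. reflexivity. Qed.

Lemma demands_perm K K2 T T2 Q Q2 : Permutation K K2 -> Permutation T T2 -> Permutation Q Q2 ->
  Permutation (demands {| combs := K; tens := T; pars := Q |})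
    (demands {| combs := K2; tens := T2; pars := Q2 |}).
Proof.
  intros HK HT HQ. unfold demands; cbn [combs tens pars].
  rewrite HK, HT, HQ. reflexivity.
Qed.

Lemma supplies_perm K K2 T T2 Q Q2 : Permutation K K2 -> Permutation T T2 -> Permutation Q Q2 ->
  Permutation (supplies {| combs := K; tens := T; pars := Q |})
    (supplies {| combs := K2; tens := T2; pars := Q2 |}).
Proof.
  intros HK HT HQ. unfold supplies; cbn [combs tens pars].
  rewrite HK, HT, HQ. reflexivity.
Qed.

(* A contraction replaces the combs [rem] by [p], removes the vertices [R]
   from both the demands and the supplies, and the variables [d] from both
   the combs and the par links. *)
Lemma invariant_step X rem p K' T Q d R :
  let Y := {| combs := p :: K'; tens := T; pars := Q |} in
  invariant X -> Permutation (combs X) (rem ++ K') ->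
  Permutation (comb_vars (combs X)) (d ++ comb_vars (p :: K')) ->
  Permutation (flat_map par_vars (pars X)) (d ++ flat_map par_vars Q) ->
  incl T (tens X) -> incl Q (pars X) ->
  Permutation (demands X) (R ++ demands Y) -> Permutation (supplies X) (R ++ supplies Y) ->
  comb_ok (comb_vars (p :: K')) p ->
  invariant Y.
Proof.
  intros Y [I1 I2 I3 I4 I5 I6 I7 I8] HK HL HQ HT HP HD HS Hok. unfold Y in *.
  assert (ND : NoDup (R ++ demands Y)) by (eapply Permutation_NoDup; eauto).
  assert (NL : NoDup (d ++ comb_vars (p :: K'))) by (eapply Permutation_NoDup; eauto).
  constructor; cbn [combs tens pars].
  - intros q [<-|Hq]; auto. eapply comb_ok_mono; [|apply I1].
    + intros z Hz. eapply Permutation_in; [symmetry; exact HL|apply in_or_app; auto].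
    + eapply Permutation_in; [symmetry; exact HK|apply in_or_app; auto].
  - apply (Permutation_app_inv_l d). rewrite <- HL, I2, HQ. perm_solve.
  - eapply NoDup_app_remove_l; eauto.
  - intros t Ht; auto.
  - intros q Hq; auto.
  - eapply NoDup_app_remove_l; eauto.
  - intros x Hx.
    assert (Hx' : In x (supplies X))
      by (apply I7; eapply Permutation_in; [symmetry; exact HD|apply in_or_app; auto]).
    eapply Permutation_in in Hx'; [|exact HS]. apply in_app_or in Hx' as [Hr|Hr]; auto.
    exfalso. exact (nodup_app_disj _ _ ND x Hr Hx).
  - intros x Hx. apply I8. eapply Permutation_in; [symmetry; exact HD|apply in_or_app; auto].
Qed.

Lemma fr_owner_unique (L : list nat) x y z : NoDup (flat_map fr L) -> In x L -> In y L ->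
  In z (fr x) -> In z (fr y) -> x = y.
Proof.
  induction L as [|w L IH]; intros HN Hx Hy Hzx Hzy; [inversion Hx|].
  simpl in HN. destruct Hx as [<-|Hx]; destruct Hy as [<-|Hy]; auto.
  - exfalso. apply (nodup_app_disj _ _ HN z Hzx). apply in_flat_map. eauto.
  - exfalso. apply (nodup_app_disj _ _ HN z Hzy). apply in_flat_map. eauto.
  - eapply IH; eauto. eapply NoDup_app_remove_l; eauto.
Qed.

Lemma owner_in O a z : incl O inputs -> In a inputs -> In z (fr a) -> In z (flat_map fr O) ->
  In a O.
Proof.
  intros HO Ha Hz HzO. apply in_flat_map in HzO as (o & Ho & Hzo).
  destruct fresh_fr as (_ & HN & _).
  replace a with o
    by (eapply fr_owner_unique; [exact HN|apply HO; auto|exact Ha|exact Hzo|exact Hz]).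
  exact Ho.
Qed.

Lemma owner_split O a s : incl O inputs -> In a inputs -> Permutation (fr a ++ s) (flat_map fr O) ->
  exists O', Permutation O (a :: O') /\ Permutation s (flat_map fr O') /\ incl O' inputs.
Proof.
  intros HO Ha HP. destruct (fr_nonempty a Ha) as [z Hz].
  assert (HaO : In a O)
    by (eapply owner_in; eauto; eapply Permutation_in; [exact HP|apply in_or_app; auto]).
  destruct (in_Permutation_cons O a HaO) as [O' HO'].
  exists O'. split; [auto|split].
  - apply (Permutation_app_inv_l (fr a)). rewrite HP.
    change (fr a ++ flat_map fr O') with (flat_map fr (a :: O')). apply Permutation_flat_map; auto.
  - intros x Hx. apply HO. eapply Permutation_in; [symmetry; exact HO'|right; auto].
Qed.

Lemma NoDup_owners O : incl O inputs -> NoDup (flat_map fr O) -> NoDup O.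
Proof.
  induction O as [|o O IH]; intros Hi HN; constructor.
  - intro Ho. simpl in HN. destruct (fr_nonempty o (Hi o (or_introl eq_refl))) as [z Hz].
    apply (nodup_app_disj _ _ HN z Hz). apply in_flat_map; eauto.
  - apply IH; [intros z Hz; apply Hi; right; auto|]. simpl in HN. eapply NoDup_app_remove_l; eauto.
Qed.

Lemma owners_perm O O' : incl O inputs -> incl O' inputs -> NoDup (flat_map fr O) ->
  Permutation (flat_map fr O) (flat_map fr O') -> Permutation O O'.
Proof.
  intros Hi Hi' HN Hp.
  assert (HN' : NoDup (flat_map fr O')) by (eapply Permutation_NoDup; eauto).
  apply NoDup_Permutation; try (apply NoDup_owners; auto).
  intros x; split; intros Hx.
  - destruct (fr_nonempty x (Hi x Hx)) as [z Hz].
    eapply owner_in; eauto. eapply Permutation_in; [exact Hp|apply in_flat_map; eauto].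
  - destruct (fr_nonempty x (Hi' x Hx)) as [z Hz].
    eapply owner_in; eauto. eapply Permutation_in; [symmetry; exact Hp|apply in_flat_map; eauto].
Qed.

Lemma link_facts l : In l (plinks P) ->
  link_ok (plab P) l /\ NoDup (prems l ++ concls l) /\ incl (prems l ++ concls l) (pverts P).
Proof. intros Hl. destruct ps_P as (_ & _ & Hlk & _). auto. Qed.

Lemma wf_pverts v : In v (pverts P) -> wf (plab P v).
Proof. intros Hv. destruct ps_P as (_ & Hwf & _). auto. Qed.

Lemma inputs_pverts a : In a inputs -> In a (pverts P).
Proof.
  intros Ha. apply in_app_or in Ha as [Ha|Ha]; [apply hyps_hs in Ha; apply Ha|].
  apply in_flat_map in Ha as (l & Hl & Ha). apply (link_facts l Hl), in_or_app; right.
  apply auxs_concls; auto.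
Qed.

Lemma hs_inputs : incl hs inputs.
Proof. intros z Hz; apply in_or_app; auto. Qed.

Lemma auxs_inputs : incl (all_auxs P) inputs.
Proof. intros z Hz; apply in_or_app; auto. Qed.

Lemma comb_ok_input L h : In h inputs -> comb_ok L (spine (fr h), h).
Proof.
  intros Hh. pose proof (inputs_pverts h Hh) as Hv. split; [auto|split]; cbn [fst snd].
  - apply ssort_spine_fr; auto.
  - exists [h]. split; [intros x [<-|[]]; auto|split].
    + rewrite free_vars_spine by (apply fr_fresh; auto). simpl. rewrite app_nil_r. reflexivity.
    + apply derives_input; auto using wf_pverts.
Qed.

Lemma comb_ok_plus_link L x y z : In x (pverts P) -> In y (pverts P) -> In z (pverts P) ->
  plus_linked (plab P x) (plab P y) (plab P z) -> comb_ok L ([SV x; SV y], z).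
Proof.
  intros Hx Hy Hz Hpl.
  apply is_vertex_true in Hx as Hxv; apply is_vertex_true in Hy as Hyv.
  split; [auto|split]; cbn [fst snd].
  - unfold ssort; simpl; rewrite !abs_sort_vertex by auto.
    rewrite (plus_linked_sort _ _ _ Hpl) by (apply wf_pverts; auto); lia.
  - exists []. split; [intros ? []|split].
    + unfold free_vars; simpl; rewrite Hxv, Hyv; reflexivity.
    + apply derives_plus_link; auto.
Qed.

Lemma comb_ok_abs_comb L l p : In l (plinks P) -> In p (abs_comb l) -> comb_ok L p.
Proof.
  intros Hl Hp. destruct (link_facts l Hl) as (Hok & _ & Hi).
  destruct l; simpl in Hp; try contradiction; destruct Hp as [<-|[]]; simpl in *;
    (apply comb_ok_plus_link; [apply Hi; simpl; tauto|apply Hi; simpl; tauto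
      |apply Hi; simpl; tauto|unfold plus_linked; tauto]).
Qed.

Lemma comb_vars_abs_comb L : incl L (plinks P) -> comb_vars (flat_map abs_comb L) = [].
Proof.
  induction L as [|l L IH]; intros Hi; [reflexivity|].
  simpl. rewrite comb_vars_app, IH by (intros z Hz; apply Hi; right; auto).
  destruct (link_facts l (Hi l (or_introl eq_refl))) as (_ & _ & Hin).
  destruct l as [x y z|x y z|x y z|k x y z|k x y z|k x y z|x y z|k x y z|x y z|x y z|k x y z|k x y z];
      simpl; try reflexivity;
    (assert (Hx : is_vertex P x = true) by (apply is_vertex_true; apply Hin; simpl; tauto));
    (assert (Hy : is_vertex P y = true) by (apply is_vertex_true; apply Hin; simpl; tauto));
    unfold comb_vars, free_vars; simpl; rewrite Hx, Hy; reflexivity.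
Qed.

Lemma comb_vars_inputs L : incl L inputs ->
  comb_vars (map (fun h => (spine (fr h), h)) L) = flat_map fr L.
Proof.
  induction L as [|h L IH]; intros Hi; [reflexivity|]. cbn [map].
  rewrite comb_vars_cons, IH by (intros z Hz; apply Hi; right; auto).
  rewrite free_vars_spine by (apply fr_fresh; apply Hi; left; auto).
  reflexivity.
Qed.

Lemma holes_inputs L : incl L inputs ->
  flat_map (fun p => holes P (fst p)) (map (fun h => (spine (fr h), h)) L) = [].
Proof.
  induction L as [|h L IH]; intros Hi; [reflexivity|]. simpl. rewrite holes_spine, IH; auto.
  - intros z Hz; apply Hi; right; auto.
  - apply fr_fresh; apply Hi; left; auto.
Qed.

Lemma par_vars_abs_par L :
  flat_map par_vars (flat_map (abs_par fr) L) = flat_map fr (flat_map auxs L).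
Proof.
  induction L as [|l L IH]; [reflexivity|]. simpl. rewrite !flat_map_app, IH. f_equal.
  destruct l; simpl; rewrite ?app_nil_r; reflexivity.
Qed.

Lemma comb_vars_aps0 : comb_vars (combs aps0) = flat_map fr hs ++ flat_map fr (all_auxs P).
Proof.
  unfold aps0, abstract; cbn [combs].
  rewrite !comb_vars_app, comb_vars_abs_comb, !comb_vars_inputs;
    auto using hs_inputs, auxs_inputs, incl_refl.
Qed.

Lemma demands_links L : incl L (plinks P) ->
  Permutation (flat_map (fun p => holes P (fst p)) (flat_map abs_comb L)
    ++ flat_map tens_premisses (flat_map abs_tens L) ++ map par_premiss (flat_map (abs_par fr) L))
    (flat_map prems L).
Proof.
  induction L as [|l L IH]; intros Hi; [reflexivity|]. simpl. rewrite !flat_map_app, map_app.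
  assert (IH' := IH (fun z Hz => Hi z (or_intror Hz))).
  assert (E : flat_map (fun p => holes P (fst p)) (abs_comb l) ++ flat_map tens_premisses (abs_tens l)
    ++ map par_premiss (abs_par fr l) = prems l).
  { destruct (link_facts l (Hi l (or_introl eq_refl))) as (_ & _ & Hin).
    destruct l as [x y z|x y z|x y z|k x y z|k x y z|k x y z|x y z|k x y z|x y z|x y z|k x y z|k x y z];
      simpl; try reflexivity;
      (assert (Hx : is_vertex P x = true) by (apply is_vertex_true; apply Hin; simpl; tauto));
      (assert (Hy : is_vertex P y = true) by (apply is_vertex_true; apply Hin; simpl; tauto));
      unfold holes; simpl; rewrite Hx, Hy; reflexivity. }
  rewrite <- E, <- IH'. perm_solve.
Qed.

Lemma demands_aps0 : Permutation (demands aps0) (flat_map prems (plinks P)).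
Proof.
  unfold demands, aps0, abstract; cbn [combs tens pars].
  rewrite !flat_map_app, !holes_inputs by auto using hs_inputs, auxs_inputs.
  rewrite !app_nil_r. apply demands_links, incl_refl.
Qed.

Lemma concls_supplied_by_link l : incl (concls l)
  (map snd (abs_comb l) ++ map tens_concl (abs_tens l) ++ flat_map par_main (abs_par fr l)
   ++ auxs l).
Proof. destruct l; intros x; simpl; tauto. Qed.

Lemma premiss_supplied x : In x (flat_map prems (plinks P)) -> In x (supplies aps0).
Proof.
  intros Hx. apply in_flat_map in Hx as (l & Hl & Hx).
  assert (Hv : In x (pverts P)) by (apply (link_facts l Hl), in_or_app; auto).
  unfold supplies, aps0, abstract; cbn [combs tens pars].
  rewrite !map_app, !map_map, !in_app_iff; cbn [snd].
  destruct (in_dec Nat.eq_dec x (flat_map concls (plinks P))) as [Hc|Hc].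
  - apply in_flat_map in Hc as (l' & Hl' & Hc).
    apply concls_supplied_by_link in Hc. rewrite !in_app_iff in Hc.
    destruct Hc as [Hc|[Hc|[Hc|Hc]]].
    + left. left. apply in_map_iff in Hc as (p & <- & Hp). apply in_map, in_flat_map. eauto.
    + right. left. apply in_map_iff in Hc as (t & <- & Ht). apply in_map, in_flat_map. eauto.
    + right. right. apply in_flat_map in Hc as (p & Hp & Hm). apply in_flat_map.
      exists p. split; auto. apply in_flat_map. eauto.
    + left. right. right. rewrite map_id. apply in_flat_map. eauto.
  - left. right. left. rewrite map_id. apply hyps_hs. split; auto.
    intros l' Hl' Hx'. apply Hc, in_flat_map. eauto.
Qed.

Lemma invariant_aps0 : invariant aps0.
Proof.
  constructor.
  - intros p Hp. unfold aps0, abstract in Hp; cbn [combs] in Hp. rewrite !in_app_iff in Hp.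
    destruct Hp as [Hp|[Hp|Hp]].
    + apply in_flat_map in Hp as (l & Hl & Hp). eapply comb_ok_abs_comb; eauto.
    + apply in_map_iff in Hp as (h & <- & Hh). apply comb_ok_input, hs_inputs; auto.
    + apply in_map_iff in Hp as (h & <- & Hh). apply comb_ok_input, auxs_inputs; auto.
  - rewrite comb_vars_aps0. unfold aps0, abstract; cbn [pars]. rewrite par_vars_abs_par. reflexivity.
  - rewrite comb_vars_aps0, <- flat_map_app. destruct fresh_fr as (_ & HN & _). exact HN.
  - apply incl_refl.
  - apply incl_refl.
  - rewrite demands_aps0. destruct ps_P as (_ & _ & Hlk & Hc & _).
    apply NoDup_flat_map_count; auto.
    intros l Hl. destruct (Hlk l Hl) as (_ & HN & _). eapply NoDup_app_remove_r; eauto.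
  - intros z Hz. apply premiss_supplied. rewrite <- demands_aps0. auto.
  - intros z Hz. rewrite <- demands_aps0. auto.
Qed.

Lemma invariant_final gamma c : invariant {| combs := [(gamma, c)]; tens := []; pars := [] |} ->
  is_concl P c -> nd (map (fun h => (spine (fr h), plab P h)) hs) gamma (plab P c).
Proof.
  intros [I1 I2 I3 _ _ _ I7 I8] Hc.
  unfold demands, supplies, comb_vars in *; cbn [combs tens pars flat_map map fst snd] in *.
  rewrite !app_nil_r in *.
  (* a hole of [gamma] would be both the conclusion [c] and the premiss of a link *)
  assert (Hop : holes P gamma = []).
  { destruct (holes P gamma) as [|x l] eqn:E; auto. exfalso.
    assert (Hx : In x (x :: l)) by (left; auto).
    pose proof (I7 x Hx) as [Hxc|[]]. subst x. apply I8 in Hx.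
    apply in_flat_map in Hx as (l' & Hl' & Hx'). exact (proj2 Hc l' Hl' Hx'). }
  destruct (I1 (gamma, c) (or_introl eq_refl)) as (_ & _ & O & HO & Hp & HG). cbn [fst snd] in *.
  assert (HPO : Permutation O hs).
  { apply owners_perm; auto using hs_inputs.
    - rewrite <- Hp. exact I3.
    - rewrite <- Hp. exact I2. }
  specialize (HG (fun _ => ([], []))). rewrite Hop, plug_no_holes in HG by auto.
  cbn in HG. rewrite !app_nil_r in HG.
  eapply nd_perm; [apply Permutation_map, HPO|apply HG].
  - intros ? [].
  - rewrite <- Hp. exact I3.
  - intros z [].
Qed.

Lemma hole_demanded_once K T Q a1 a2 w v K' : is_vertex P w = true ->
  invariant {| combs := K; tens := T; pars := Q |} -> Permutation K ((a1 ++ SV w :: a2, v) :: K') ->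
  ~ In w (holes P a1 ++ holes P a2).
Proof.
  intros Hw HI HK. pose proof (inv_demands_nodup _ HI) as ND.
  rewrite (demands_perm _ _ _ _ _ _ HK (Permutation_refl T) (Permutation_refl Q)) in ND.
  unfold demands in ND; cbn [combs flat_map fst] in ND. rewrite holes_mid in ND by auto.
  rewrite <- !app_assoc in ND. apply NoDup_remove_2 in ND.
  intros Hin; apply ND. rewrite !in_app_iff in *. tauto.
Qed.

Lemma invariant_plus K T Q a1 a2 w v b K' :
  Permutation K ((a1 ++ SV w :: a2, v) :: (b, w) :: K') ->
  invariant {| combs := K; tens := T; pars := Q |} ->
  invariant {| combs := (a1 ++ b ++ a2, v) :: K'; tens := T; pars := Q |}.
Proof.
  intros HK HI.
  destruct (inv_combs _ HI (a1 ++ SV w :: a2, v)) as (Hv & Hsa & Oa & HOa & Hpa & HGa);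
    [cbn [combs]; rewrite HK; left; auto|].
  destruct (inv_combs _ HI (b, w)) as (Hw & Hsb & Ob & HOb & Hpb & HGb);
    [cbn [combs]; rewrite HK; right; left; auto|].
  cbn [fst snd] in *.
  assert (Hwv : is_vertex P w = true) by (apply is_vertex_true; auto).
  assert (HL : Permutation (comb_vars K) (comb_vars ((a1 ++ b ++ a2, v) :: K'))).
  { rewrite (comb_vars_perm _ _ HK), !comb_vars_cons, free_vars_mid, !free_vars_app by auto.
    perm_solve. }
  apply (invariant_step _ [(a1 ++ SV w :: a2, v); (b, w)] _ _ _ _ [] [w] HI); cbn [combs tens pars].
  - exact HK.
  - exact HL.
  - reflexivity.
  - apply incl_refl.
  - apply incl_refl.
  - rewrite (demands_perm _ _ _ _ _ _ HK (Permutation_refl T) (Permutation_refl Q)).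
    unfold demands; cbn [combs tens pars flat_map fst]. rewrite holes_mid, !holes_app by auto.
    perm_solve.
  - rewrite (supplies_perm _ _ _ _ _ _ HK (Permutation_refl T) (Permutation_refl Q)).
    unfold supplies; cbn [combs tens pars map snd]. perm_solve.
  - split; [auto|split]; cbn [fst snd].
    + rewrite !ssort_app, ssort_cons, abs_sort_vertex in * by auto. lia.
    + exists (Oa ++ Ob). split; [apply incl_app; auto|split].
      * rewrite flat_map_app, <- Hpa, <- Hpb, free_vars_mid, !free_vars_app by auto. perm_solve.
      * eapply derives_mono; [apply Permutation_incl; symmetry; exact HL|].
        apply derives_plus with (w := w); eauto using hole_demanded_once.
        intros z Hz. rewrite (comb_vars_perm _ _ HK), !comb_vars_cons, !in_app_iff.
        right; left. rewrite Hpb. exact Hz.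
Qed.

Lemma tens_aps0_linked k v1 v2 v : In (k, v1, v2, v) (tens aps0) ->
  wrap_linked k (plab P v1) (plab P v2) (plab P v) /\ In v (pverts P).
Proof.
  unfold aps0, abstract; cbn [tens]. intros H. apply in_flat_map in H as (l & Hl & H).
  destruct (link_facts l Hl) as (Hok & _ & Hi).
  destruct l as [x y z|x y z|x y z|k' x y z|k' x y z|k' x y z|x y z|k' x y z|x y z|x y z|k' x y z|k' x y z];
    simpl in H; try contradiction; destruct H as [E|[]]; inversion E; subst;
    (split; [unfold wrap_linked; simpl in Hok; tauto|apply Hi; simpl; tauto]).
Qed.

Lemma invariant_wrap K T Q k v1 v2 v a1 a2 b K' T' :
  Permutation T ((k, v1, v2, v) :: T') ->
  Permutation K ((a1 ++ S1 :: a2, v1) :: (b, v2) :: K') ->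
  selected (abs_sort P) k a1 a2 ->
  invariant {| combs := K; tens := T; pars := Q |} ->
  invariant {| combs := (a1 ++ b ++ a2, v) :: K'; tens := T'; pars := Q |}.
Proof.
  intros HT HK Hsel HI.
  destruct (inv_combs _ HI (a1 ++ S1 :: a2, v1)) as (Hv1 & Hsa & Oa & HOa & Hpa & HGa);
    [cbn [combs]; rewrite HK; left; auto|].
  destruct (inv_combs _ HI (b, v2)) as (Hv2 & Hsb & Ob & HOb & Hpb & HGb);
    [cbn [combs]; rewrite HK; right; left; auto|].
  cbn [fst snd] in *.
  destruct (tens_aps0_linked k v1 v2 v) as (Hwr & Hv).
  { apply (inv_tens _ HI). eapply Permutation_in; [symmetry; exact HT|left; auto]. }
  assert (HL : Permutation (comb_vars K) (comb_vars ((a1 ++ b ++ a2, v) :: K'))).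
  { rewrite (comb_vars_perm _ _ HK), !comb_vars_cons, free_vars_S1, !free_vars_app. perm_solve. }
  apply (invariant_step _ [(a1 ++ S1 :: a2, v1); (b, v2)] _ _ _ _ [] [v1; v2] HI);
    cbn [combs tens pars].
  - exact HK.
  - exact HL.
  - reflexivity.
  - intros t Ht. eapply Permutation_in; [symmetry; exact HT|right; auto].
  - apply incl_refl.
  - rewrite (demands_perm _ _ _ _ _ _ HK HT (Permutation_refl Q)).
    unfold demands; cbn [combs tens pars flat_map fst tens_premisses].
    rewrite holes_S1, !holes_app. perm_solve.
  - rewrite (supplies_perm _ _ _ _ _ _ HK HT (Permutation_refl Q)).
    unfold supplies; cbn [combs tens pars map snd tens_concl]. perm_solve.
  - split; [auto|split]; cbn [fst snd].
    + rewrite !ssort_app, ssort_cons in *.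
      rewrite (wrap_linked_sort _ _ _ _ Hwr) by (auto using wf_pverts; lia). lia.
    + exists (Oa ++ Ob). split; [apply incl_app; auto|split].
      * rewrite flat_map_app, <- Hpa, <- Hpb, free_vars_S1, !free_vars_app. perm_solve.
      * eapply derives_mono; [apply Permutation_incl; symmetry; exact HL|].
        eapply derives_wrap; eauto.
Qed.

Lemma invariant_intro K T Q p c a v s s2 K' Q' rel :
  Permutation Q (p :: Q') -> Permutation K ((s, c) :: K') ->
  par_vars p = fr a -> In a inputs -> par_premiss p = c -> par_main p = [v] -> In v (pverts P) ->
  Permutation (free_vars P s) (fr a ++ free_vars P s2) -> holes P s = holes P s2 ->
  (ssort (abs_sort P) s = sort (plab P c) -> ssort (abs_sort P) s2 = sort (plab P v)) ->
  intro_rule (spine (fr a)) (plab P a) (plab P c) (plab P v) rel ->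
  (forall sg, fills P sg (holes P s2) -> rel (plug P sg s2) (plug P sg s)) ->
  invariant {| combs := K; tens := T; pars := Q |} ->
  invariant {| combs := (s2, v) :: K'; tens := T; pars := Q' |}.
Proof.
  intros HQ HK Hpv Ha Hpp Hpm Hv Hfs Hh Hss Hrule Hrel HI.
  destruct (inv_combs _ HI (s, c)) as (Hc & Hs & O & HO & Hp & HG);
    [cbn [combs]; rewrite HK; left; auto|].
  cbn [fst snd] in *.
  destruct (owner_split O a (free_vars P s2) HO Ha) as (O' & HO' & Hp' & HOU);
    [rewrite <- Hfs; auto|].
  assert (HL : Permutation (comb_vars K) (fr a ++ comb_vars ((s2, v) :: K'))).
  { rewrite (comb_vars_perm _ _ HK), !comb_vars_cons, Hfs. perm_solve. }
  destruct (removed_vars_disjoint _ _ _ (inv_vars_nodup _ HI) HL) as [HLi HLd].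
  apply (invariant_step _ [(s, c)] _ _ _ _ (fr a) [c] HI); cbn [combs tens pars].
  - exact HK.
  - exact HL.
  - rewrite HQ. cbn [flat_map]. rewrite Hpv. reflexivity.
  - apply incl_refl.
  - intros q Hq. eapply Permutation_in; [symmetry; exact HQ|right; auto].
  - rewrite (demands_perm _ _ _ _ _ _ HK (Permutation_refl T) HQ).
    unfold demands; cbn [combs tens pars flat_map map fst]. rewrite Hh, Hpp. perm_solve.
  - rewrite (supplies_perm _ _ _ _ _ _ HK (Permutation_refl T) HQ).
    unfold supplies; cbn [combs tens pars flat_map map snd]. rewrite Hpm. perm_solve.
  - split; [auto|split; [auto|]]; cbn [fst snd].
    exists O'. split; [auto|split; [auto|]].
    eapply derives_intro with (L := comb_vars K); eauto.
    + eapply derives_perm; eauto.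
    + intros z Hz Hz'. apply (HLd z); auto.
      rewrite comb_vars_cons. apply in_or_app; left. rewrite Hp'. exact Hz'.
Qed.

Lemma invariant_elim K T Q p v1 a b v2 w g1 g2 K' Q' :
  Permutation Q (p :: Q') -> Permutation K ((g1 ++ w ++ g2, v2) :: K') ->
  par_vars p = fr a ++ fr b -> In a inputs -> In b inputs ->
  par_premiss p = v1 -> par_main p = [] ->
  In v1 (pverts P) -> Permutation (free_vars P w) (fr a ++ fr b) -> holes P w = [] ->
  ssort (abs_sort P) w = sort (plab P v1) ->
  elim_rule (spine (fr a)) (spine (fr b)) w (plab P a) (plab P b) (plab P v1) ->
  invariant {| combs := K; tens := T; pars := Q |} ->
  invariant {| combs := (g1 ++ SV v1 :: g2, v2) :: K'; tens := T; pars := Q' |}.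
Proof.
  intros HQ HK Hpv Ha Hb Hpp Hpm Hv1 Hfw Hhw Hsw Hrule HI.
  apply is_vertex_true in Hv1 as Hv1'.
  destruct (inv_combs _ HI (g1 ++ w ++ g2, v2)) as (Hc & Hs & O & HO & Hp & HG);
    [cbn [combs]; rewrite HK; left; auto|].
  cbn [fst snd] in *.
  destruct (owner_split O a (fr b ++ free_vars P g1 ++ free_vars P g2) HO Ha)
    as (O1 & HO1 & Hp1 & HOU1); [rewrite <- Hp, !free_vars_app, Hfw; perm_solve|].
  destruct (owner_split O1 b _ HOU1 Hb Hp1) as (O2 & HO2 & Hp2 & HOU2).
  assert (HL : Permutation (comb_vars K)
    ((fr a ++ fr b) ++ comb_vars ((g1 ++ SV v1 :: g2, v2) :: K'))).
  { rewrite (comb_vars_perm _ _ HK), !comb_vars_cons, free_vars_mid, !free_vars_app, Hfw by auto.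
    perm_solve. }
  destruct (removed_vars_disjoint _ _ _ (inv_vars_nodup _ HI) HL) as [HLi HLd].
  assert (Nab : NoDup (fr a ++ fr b)).
  { eapply NoDup_app_remove_r, Permutation_NoDup; [exact HL|apply (inv_vars_nodup _ HI)]. }
  apply (invariant_step _ [(g1 ++ w ++ g2, v2)] _ _ _ _ (fr a ++ fr b) [] HI);
    cbn [combs tens pars].
  - exact HK.
  - exact HL.
  - rewrite HQ. cbn [flat_map]. rewrite Hpv. reflexivity.
  - apply incl_refl.
  - intros q Hq. eapply Permutation_in; [symmetry; exact HQ|right; auto].
  - rewrite (demands_perm _ _ _ _ _ _ HK (Permutation_refl T) HQ).
    unfold demands; cbn [combs tens pars flat_map map fst].
    rewrite holes_mid, !holes_app, Hhw, Hpp by auto. perm_solve.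
  - rewrite (supplies_perm _ _ _ _ _ _ HK (Permutation_refl T) HQ).
    unfold supplies; cbn [combs tens pars flat_map map snd]. rewrite Hpm. perm_solve.
  - split; [auto|split]; cbn [fst snd].
    + rewrite !ssort_app, ssort_cons, abs_sort_vertex in * by auto. lia.
    + exists O2. split; [auto|split].
      * rewrite free_vars_mid by auto. exact Hp2.
      * apply derives_elim with (L := comb_vars K) (a := a) (b := b) (w := w); auto.
        -- eapply derives_perm; [|exact HG]. rewrite HO1. apply perm_skip, HO2.
        -- intros z Hz Hz'. apply (HLd z); auto.
           rewrite comb_vars_cons, free_vars_mid by auto.
           apply in_or_app; left. rewrite Hp2. exact Hz'.
Qed.

Lemma pars_aps0 p : In p (pars aps0) -> exists l, In l (plinks P) /\ In p (abs_par fr l).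
Proof. unfold aps0, abstract; cbn [pars]. apply in_flat_map. Qed.

Lemma auxs_inputs_of l : In l (plinks P) -> incl (auxs l) inputs.
Proof. intros Hl x Hx. apply auxs_inputs, in_flat_map. eauto. Qed.

(* Recovers the par link of [P] behind a par link [H] of the abstract proof
   structure, with its auxiliary inputs and the formulas of its vertices. *)
Ltac par_link H :=
  let l := fresh "l" in let Hl := fresh "Hl" in let Hp := fresh "Hp" in
  let Hok := fresh "Hok" in let Hi := fresh "Hi" in let E := fresh "E" in
  destruct (pars_aps0 _ H) as (l & Hl & Hp); destruct (link_facts l Hl) as (Hok & _ & Hi);
  pose proof (auxs_inputs_of l Hl) as Haux;
  destruct l; simpl in Hp; try contradiction; destruct Hp as [E|[]]; inversion E; subst; clear E;
  simpl in Hok, Haux.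

Lemma invariant_under K T Q c eA v b K' Q' :
  Permutation Q (ParRUnder c eA v :: Q') -> Permutation K ((spine eA ++ b, c) :: K') ->
  invariant {| combs := K; tens := T; pars := Q |} ->
  invariant {| combs := (b, v) :: K'; tens := T; pars := Q' |}.
Proof.
  intros HQ HK HI.
  assert (Hp0 : In (ParRUnder c eA v) (pars aps0))
    by (apply (inv_pars _ HI); cbn [pars]; rewrite HQ; left; auto).
  par_link Hp0. assert (Ha : In a inputs) by (apply Haux; left; auto).
  apply (invariant_intro K T Q _ c a v _ b K' Q' (fun g r => r = spine (fr a) ++ g) HQ HK); auto.
  - apply Hi; simpl; tauto.
  - rewrite free_vars_app, free_vars_spine by auto using fr_fresh. reflexivity.
  - rewrite holes_app, holes_spine by auto using fr_fresh. reflexivity.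
  - rewrite ssort_app, ssort_spine_fr, Hok by auto. simpl. lia.
  - rewrite Hok. apply intro_rule_under.
  - intros sg _.
    rewrite plug_app, plug_no_holes by auto using holes_spine, fr_fresh. reflexivity.
Qed.

Lemma invariant_over K T Q c eB v b K' Q' :
  Permutation Q (ParROver c v eB :: Q') -> Permutation K ((b ++ spine eB, c) :: K') ->
  invariant {| combs := K; tens := T; pars := Q |} ->
  invariant {| combs := (b, v) :: K'; tens := T; pars := Q' |}.
Proof.
  intros HQ HK HI.
  assert (Hp0 : In (ParROver c v eB) (pars aps0))
    by (apply (inv_pars _ HI); cbn [pars]; rewrite HQ; left; auto).
  par_link Hp0. assert (Hb : In b0 inputs) by (apply Haux; left; auto).
  apply (invariant_intro K T Q _ c b0 v _ b K' Q' (fun g r => r = g ++ spine (fr b0)) HQ HK);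
    auto.
  - apply Hi; simpl; tauto.
  - rewrite free_vars_app, free_vars_spine by auto using fr_fresh. apply Permutation_app_comm.
  - rewrite holes_app, holes_spine, app_nil_r by auto using fr_fresh. reflexivity.
  - rewrite ssort_app, ssort_spine_fr, Hok by auto. simpl. lia.
  - rewrite Hok. apply intro_rule_over.
  - intros sg _. rewrite plug_app, (plug_no_holes _ _ (spine _)) by auto using holes_spine, fr_fresh.
    reflexivity.
Qed.

Lemma invariant_ext K T Q k c eB v a1 a2 K' Q' :
  Permutation Q (ParRExt k c v eB :: Q') -> Permutation K ((a1 ++ spine eB ++ a2, c) :: K') ->
  selected (abs_sort P) k a1 a2 ->
  invariant {| combs := K; tens := T; pars := Q |} ->
  invariant {| combs := (a1 ++ S1 :: a2, v) :: K'; tens := T; pars := Q' |}.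
Proof.
  intros HQ HK Hsel HI.
  assert (Hp0 : In (ParRExt k c v eB) (pars aps0))
    by (apply (inv_pars _ HI); cbn [pars]; rewrite HQ; left; auto).
  par_link Hp0. assert (Hb : In b inputs) by (apply Haux; left; auto).
  apply (invariant_intro K T Q _ c b v _ _ K' Q' (fun g r => wraps k g (spine (fr b)) r) HQ HK);
    auto.
  - apply Hi; simpl; tauto.
  - rewrite free_vars_S1, !free_vars_app, free_vars_spine by auto using fr_fresh. perm_solve.
  - rewrite holes_S1, !holes_app, holes_spine by auto using fr_fresh. reflexivity.
  - rewrite !ssort_app, ssort_cons, ssort_spine_fr, Hok by auto. simpl. lia.
  - rewrite Hok. apply intro_rule_ext.
  - intros sg Hs. rewrite holes_S1 in Hs.
    exists (plug P sg a1), (plug P sg a2). split; [apply plug_S1|split].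
    + apply selected_plug; auto; intros x Hx; apply Hs, in_or_app; auto.
    + rewrite !plug_app, (plug_no_holes _ _ (spine _)) by auto using holes_spine, fr_fresh.
      reflexivity.
Qed.

Lemma invariant_inf K T Q k c eA v e1 e2 b K' Q' :
  Permutation Q (ParRInf k c eA v :: Q') ->
  spine eA = e1 ++ S1 :: e2 -> selected (abs_sort P) k e1 e2 ->
  Permutation K ((e1 ++ b ++ e2, c) :: K') ->
  invariant {| combs := K; tens := T; pars := Q |} ->
  invariant {| combs := (b, v) :: K'; tens := T; pars := Q' |}.
Proof.
  intros HQ He Hsel HK HI.
  assert (Hp0 : In (ParRInf k c eA v) (pars aps0))
    by (apply (inv_pars _ HI); cbn [pars]; rewrite HQ; left; auto).
  par_link Hp0. assert (Ha : In a inputs) by (apply Haux; left; auto).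
  destruct (holes_spine_split P _ e1 e2 (fr_fresh a Ha) He) as [E1 E2].
  assert (Hfa : free_vars P e1 ++ free_vars P e2 = fr a).
  { rewrite <- (free_vars_spine P (fr a)), He, free_vars_S1 by auto using fr_fresh. reflexivity. }
  assert (Hsa : ssort (abs_sort P) e1 + 1 + ssort (abs_sort P) e2 = sort (plab P a)).
  { rewrite <- ssort_spine_fr, He, ssort_app, ssort_cons by auto. lia. }
  apply (invariant_intro K T Q _ c a v _ b K' Q' (fun g r => wraps k (spine (fr a)) g r) HQ HK);
    auto.
  - apply Hi; simpl; tauto.
  - rewrite !free_vars_app, <- Hfa. perm_solve.
  - rewrite !holes_app, E1, E2, app_nil_r. reflexivity.
  - rewrite !ssort_app, Hok. simpl. lia.
  - rewrite Hok. apply intro_rule_inf.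
  - intros sg _. rewrite He. exists e1, e2. split; [reflexivity|split].
    + unfold selected in *. change (ssort (fun _ => 0)) with str_sort.
      rewrite <- !(ssort_no_holes P); auto.
    + rewrite !plug_app, (plug_no_holes _ _ e1), (plug_no_holes _ _ e2); auto.
Qed.

Lemma invariant_prod K T Q v1 eA eB g1 g2 v2 K' Q' :
  Permutation Q (ParLProd v1 eA eB :: Q') ->
  Permutation K ((g1 ++ spine eA ++ spine eB ++ g2, v2) :: K') ->
  invariant {| combs := K; tens := T; pars := Q |} ->
  invariant {| combs := (g1 ++ SV v1 :: g2, v2) :: K'; tens := T; pars := Q' |}.
Proof.
  intros HQ HK HI.
  assert (Hp0 : In (ParLProd v1 eA eB) (pars aps0))
    by (apply (inv_pars _ HI); cbn [pars]; rewrite HQ; left; auto).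
  par_link Hp0.
  assert (Ha : In a inputs) by (apply Haux; left; auto).
  assert (Hb : In b inputs) by (apply Haux; right; left; auto).
  rewrite (app_assoc (spine (fr a))) in HK.
  apply (invariant_elim K T Q _ v1 a b v2 _ g1 g2 K' Q' HQ HK); auto.
  - apply Hi; simpl; tauto.
  - rewrite free_vars_app, !free_vars_spine by auto using fr_fresh. reflexivity.
  - rewrite holes_app, !holes_spine by auto using fr_fresh. reflexivity.
  - rewrite ssort_app, !ssort_spine_fr, Hok by auto. reflexivity.
  - rewrite Hok. apply elim_rule_prod.
Qed.

Lemma invariant_wrappar K T Q k v1 eA eB e1 e2 g1 g2 v2 K' Q' :
  Permutation Q (ParLWrap k v1 eA eB :: Q') ->
  spine eA = e1 ++ S1 :: e2 -> selected (abs_sort P) k e1 e2 ->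
  Permutation K ((g1 ++ e1 ++ spine eB ++ e2 ++ g2, v2) :: K') ->
  invariant {| combs := K; tens := T; pars := Q |} ->
  invariant {| combs := (g1 ++ SV v1 :: g2, v2) :: K'; tens := T; pars := Q' |}.
Proof.
  intros HQ He Hsel HK HI.
  assert (Hp0 : In (ParLWrap k v1 eA eB) (pars aps0))
    by (apply (inv_pars _ HI); cbn [pars]; rewrite HQ; left; auto).
  par_link Hp0.
  assert (Ha : In a inputs) by (apply Haux; left; auto).
  assert (Hb : In b inputs) by (apply Haux; right; left; auto).
  destruct (holes_spine_split P _ e1 e2 (fr_fresh a Ha) He) as [E1 E2].
  assert (Hfa : free_vars P e1 ++ free_vars P e2 = fr a).
  { rewrite <- (free_vars_spine P (fr a)), He, free_vars_S1 by auto using fr_fresh. reflexivity. }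
  assert (Hsa : ssort (abs_sort P) e1 + 1 + ssort (abs_sort P) e2 = sort (plab P a)).
  { rewrite <- ssort_spine_fr, He, ssort_app, ssort_cons by auto. lia. }
  rewrite (app_assoc (spine (fr b))), (app_assoc e1) in HK.
  apply (invariant_elim K T Q _ v1 a b v2 _ g1 g2 K' Q' HQ HK); auto.
  - apply Hi; simpl; tauto.
  - rewrite !free_vars_app, free_vars_spine, <- Hfa by auto using fr_fresh. perm_solve.
  - rewrite !holes_app, holes_spine, E1, E2 by auto using fr_fresh. reflexivity.
  - rewrite !ssort_app, ssort_spine_fr, Hok by auto. simpl. lia.
  - rewrite Hok. apply elim_rule_wrap. rewrite He. exists e1, e2. split; [reflexivity|split].
    + unfold selected in *. change (ssort (fun _ => 0)) with str_sort.
      rewrite <- !(ssort_no_holes P); auto.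
    + rewrite app_assoc. reflexivity.
Qed.

Lemma invariant_contr X Y : contr (abs_sort P) X Y -> invariant X -> invariant Y.
Proof.
  intros H. destruct H.
  - eapply invariant_plus; eauto.
  - eapply invariant_wrap; eauto.
  - eapply invariant_under; eauto.
  - eapply invariant_over; eauto.
  - eapply invariant_ext; eauto.
  - eapply invariant_inf; eauto.
  - eapply invariant_prod; eauto.
  - eapply invariant_wrappar; eauto.
Qed.

Lemma invariant_contr_star X Y :
  clos_refl_trans _ (contr (abs_sort P)) X Y -> invariant X -> invariant Y.
Proof. intros H. induction H; eauto using invariant_contr. Qed.

End Soundness.

Theorem lemma2 (P : pstruct) (hs : list nat) (c : nat) (fr : nat -> list nat)
    (gamma : str) :
  proof_structure P ->
  (* hs enumerates the hypotheses A_1, ..., A_n of P *)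
  NoDup hs -> (forall v, In v hs <-> is_hyp P v) ->
  (* c is the unique conclusion C of P *)
  is_concl P c -> (forall v, is_concl P v -> v = c) ->
  (* fresh vertices of the abstract proof structure; alpha_i = spine (fr h_i) *)
  fresh_assignment P hs fr ->
  (* a finite sequence of contractions reaches a single comb gamma |- c *)
  clos_refl_trans _ (contr (abs_sort P)) (abstract P hs fr)
    {| combs := [(gamma, c)]; tens := []; pars := [] |} ->
  nd (map (fun h => (spine (fr h), plab P h)) hs) gamma (plab P c).
Proof.
  intros Hps _ Hhs Hc _ Hfr Hcontr.
  apply invariant_final; auto.
  eapply invariant_contr_star; eauto.
  apply invariant_aps0; auto.
Qed.
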